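(* Let $p,q$ be integers with $2\le p<q\le5p-1$ and fix $\beta_3\in\mathbb{R}$. For $(\beta_1,\beta_2)\in\mathbb{R}^2$ consider $$l_{\beta_3}(u;\beta_1,\beta_2)=\beta_1u+\beta_2u^p+\beta_3u^q-\tfrac12u\log u-\tfrac12(1-u)\log(1-u),\qquad u\in[0,1].$$ Let $u_0\in(0,1)$ be the unique solution of $\beta_3=\frac{pu_0-(p-1)}{2q(q-1)(q-p)u_0^{q-1}(1-u_0)^2}$ (it exists and is unique), and set $$\beta_1^c=\tfrac12\log\tfrac{u_0}{1-u_0}-\tfrac{1}{2(p-1)(1-u_0)}+\tfrac{pu_0-(p-1)}{2(p-1)(q-1)(1-u_0)^2},\qquad \beta_2^c=\tfrac{qu_0-(q-1)}{2p(p-1)(p-q)u_0^{p-1}(1-u_0)^2}.$$ Then there is a V-shaped region $V\subset\mathbb{R}^2$ with corner point $(\beta_1^c,\beta_2^c)$, namely $V=\{(\beta_1,\beta_2):\beta_1<\beta_1^c,\ L(\beta_1)<\beta_2<U(\beta_1)\}$ for two continuous decreasing functions $L<U$ on $(-\infty,\beta_1^c)$ with $L(\beta_1),U(\beta_1)\to\beta_2^c$ as $\beta_1\to\beta_1^c$ and $L(\beta_1),U(\beta_1)\to+\infty$ as $\beta_1\to-\infty$, such that: for $(\beta_1,\beta_2)\notin V$, $l_{\beta_3}(\cdot;\beta_1,\beta_2)$ has exactly one local maximizer on $[0,1]$ (hence it is the global maximizer); for $(\beta_1,\beta_2)\in V$, $l_{\beta_3}(\cdot;\beta_1,\beta_2)$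 has exactly two local maximizers $u_1^*<u_2^*$ in $(0,1)$. Moreover, for every $\beta_1<\beta_1^c$ there is a unique $\beta_2=r_{\beta_3}(\beta_1)\in(L(\beta_1),U(\beta_1))$ such that $u_1^*$ and $u_2^*$ are both global maximizers of $l_{\beta_3}(\cdot;\beta_1,r_{\beta_3}(\beta_1))$, and $r_{\beta_3}$ is a decreasing function of $\beta_1$.
   Context: Here $0\log 0=0$, so $l_{\beta_3}$ is continuous on $[0,1]$; a local maximizer means a point of $[0,1]$ at which $l_{\beta_3}(\cdot;\beta_1,\beta_2)$ attains a local maximum. *)

From Stdlib Require Import Reals Lra.
Open Scope R_scope.

(* x log x with the convention 0 log 0 = 0 (only used on [0,1]). *)
Definition xlnx (x : R) : R := if Rle_dec x 0 then 0 else x * ln x.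

Definition lfun (p q : nat) (b3 b1 b2 u : R) : R :=
  b1 * u + b2 * u ^ p + b3 * u ^ q - / 2 * xlnx u - / 2 * xlnx (1 - u).

Definition is_local_max01 (f : R -> R) (u : R) : Prop :=
  0 <= u <= 1 /\
  exists d, 0 < d /\ forall v, 0 <= v <= 1 -> Rabs (v - u) < d -> f v <= f u.

Definition is_global_max01 (f : R -> R) (u : R) : Prop :=
  0 <= u <= 1 /\ forall v, 0 <= v <= 1 -> f v <= f u.

Definition u0_eq (p q : nat) (b3 u0 : R) : Prop :=
  b3 = (INR p * u0 - (INR p - 1)) /
       (2 * INR q * (INR q - 1) * (INR q - INR p) * u0 ^ (q - 1) * (1 - u0) ^ 2).

Definition beta1c (p q : nat) (u0 : R) : R :=
  / 2 * ln (u0 / (1 - u0)) - / (2 * (INR p - 1) * (1 - u0))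
  + (INR p * u0 - (INR p - 1)) / (2 * (INR p - 1) * (INR q - 1) * (1 - u0) ^ 2).

Definition beta2c (p q : nat) (u0 : R) : R :=
  (INR q * u0 - (INR q - 1)) /
  (2 * INR p * (INR p - 1) * (INR p - INR q) * u0 ^ (p - 1) * (1 - u0) ^ 2).

(* Write p = a + 2, q = c + a + 3, so that q <= 5p - 1 reads c <= 4a + 6.
   On (0,1), l' = b1 - g with g(u) = 1/2 log(u/(1-u)) - q b3 u^(q-1) - p b2 u^(p-1),
   and g' = p(p-1) u^(p-2) (beta(u) - b2).  In turn beta' has the sign of
   kappa(u) - b3, and kappa is increasing because the numerator of kappa' is a
   quadratic with nonpositive discriminant when q <= 5p - 1.  Hence
   kappa(u0) = b3 has a unique root, beta decreases on (0,u0], increases on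
   [u0,1) and blows up at both ends.  The curve u |-> (B1(u), beta(u)), where
   B1(u) is g at b2 = beta(u), satisfies B1' = -p u^(p-1) beta'; its two
   branches are the graphs of the boundaries L < U of V, which meet at the
   corner (B1(u0), beta(u0)) = (beta1c, beta2c).  The turning values of g
   decide whether l has one or two humps.  The coexistence line r(b1) is a
   zero, in b2, of the difference of the suprema of l on [u0,1] and [0,u0];
   it is unique and decreasing since raising (b1,b2) moves global maximizers
   to the right. *)

From Stdlib Require Import Reals Lra Lia Ranalysis5 ClassicalEpsilon.
From Coquelicot Require Import Coquelicot.
Open Scope R_scope.

Lemma pow_le_self v n : 0 <= v <= 1 -> v ^ S n <= v.
Proof.
  intros Hv; induction n as [|n IH]; [simpl; lra|].
  change (v ^ S (S n)) with (v * v ^ S n).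
  assert (0 <= v ^ S n) by (apply pow_le; lra). nra.
Qed.

Lemma pow_unit_interval v n : 0 <= v <= 1 -> 0 <= v ^ n <= 1.
Proof.
  intros Hv; split; [apply pow_le; lra|].
  induction n as [|n IH]; simpl; [lra|].
  assert (0 <= v ^ n) by (apply pow_le; lra). nra.
Qed.

Lemma one_minus_pow_le v n : 0 <= v <= 1 -> 1 - v ^ n <= INR n * (1 - v).
Proof.
  intros Hv; induction n as [|n IH]; [simpl; lra|].
  rewrite S_INR. cbn [pow]. pose proof (pow_unit_interval v n Hv). nra.
Qed.

Lemma pow_lt_S x y n : 0 <= x -> x < y -> x ^ S n < y ^ S n.
Proof.
  intros Hx Hxy; induction n as [|n IH]; [simpl; lra|].
  change (x ^ S (S n)) with (x * x ^ S n). change (y ^ S (S n)) with (y * y ^ S n).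
  assert (0 <= x ^ S n) by (apply pow_le; lra). nra.
Qed.

Lemma monomial_bound b v n : 0 <= v <= 1 -> - Rabs b <= b * v ^ n <= Rabs b.
Proof.
  intros Hv. pose proof (pow_unit_interval v n Hv).
  pose proof (Rle_abs b). pose proof (Rabs_maj2 b). split; nra.
Qed.

Lemma monomial_lb0 b v n : 0 <= v <= 1 -> - Rabs b * v <= b * v ^ S n.
Proof.
  intros Hv. pose proof (pow_le_self v n Hv). assert (0 <= v ^ S n) by (apply pow_le; lra).
  pose proof (Rle_abs b). pose proof (Rabs_maj2 b). nra.
Qed.

Lemma monomial_lb1 b v n : 0 <= v <= 1 -> - Rabs b * INR n * (1 - v) <= b * (v ^ n - 1).
Proof.
  intros Hv. pose proof (one_minus_pow_le v n Hv). pose proof (pow_unit_interval v n Hv).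
  pose proof (pos_INR n). pose proof (Rle_abs b). pose proof (Rabs_maj2 b).
  assert (Rabs b * (1 - v ^ n) <= Rabs b * (INR n * (1 - v)))
    by (apply Rmult_le_compat_l; [apply Rabs_pos | lra]).
  nra.
Qed.

Lemma ln_le_pred y : 0 < y -> ln y <= y - 1.
Proof. intros Hy. pose proof (exp_ineq1_le (ln y)). rewrite exp_ln in H; lra. Qed.

Lemma ln_neg y : 0 < y < 1 -> ln y < 0.
Proof. intros Hy. rewrite <- ln_1. apply ln_increasing; lra. Qed.

Lemma ln_small M : exists d, 0 < d <= /2 /\ forall u, 0 < u <= d -> ln u <= M.
Proof.
  exists (Rmin (/2) (exp M)); split.
  - split; [apply Rmin_glb_lt; [lra | apply exp_pos] | apply Rmin_l].
  - intros u Hu. rewrite <- (ln_exp M). apply ln_le; [lra|].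
    apply Rle_trans with (1 := proj2 Hu). apply Rmin_r.
Qed.

Lemma ln_ge_half u : /2 <= u -> - 1 < ln u.
Proof.
  intros Hu. apply Rlt_le_trans with (ln (/2)); [|apply ln_le; lra].
  rewrite ln_Rinv by lra.
  assert (ln 2 < 1).
  { rewrite <- (ln_exp 1). apply ln_increasing; [lra|].
    pose proof (exp_ineq1 1 ltac:(lra)). lra. }
  lra.
Qed.

Lemma xlnx_lb v : 0 <= v <= 1 -> - 1 <= xlnx v.
Proof.
  intros Hv. unfold xlnx. destruct (Rle_dec v 0); [lra|].
  assert (0 < v) by lra. pose proof (ln_le_pred (/ v) ltac:(apply Rinv_0_lt_compat; lra)).
  rewrite ln_Rinv in H0 by lra.
  assert (v * (- ln v) <= v * (/ v - 1)) by (apply Rmult_le_compat_l; lra).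
  replace (v * (/ v - 1)) with (1 - v) in H1 by (field; lra). nra.
Qed.

Lemma xlnx_pos x : 0 < x -> xlnx x = x * ln x.
Proof. intros H. unfold xlnx. destruct (Rle_dec x 0); lra. Qed.

Definition incr_on (I : R -> Prop) (f : R -> R) :=
  forall s t, I s -> I t -> s < t -> f s < f t.
Definition decr_on (I : R -> Prop) (f : R -> R) :=
  forall s t, I s -> I t -> s < t -> f t < f s.

Lemma incr_on_le I f s t : incr_on I f -> I s -> I t -> s <= t -> f s <= f t.
Proof. intros H Hs Ht [E|E]; [left; apply H; auto | subst; lra]. Qed.

Lemma decr_on_le I f s t : decr_on I f -> I s -> I t -> s <= t -> f t <= f s.
Proof. intros H Hs Ht [E|E]; [left; apply H; auto | subst; lra]. Qed.

Lemma incr_on_rev I f s t : incr_on I f -> I s -> I t -> f s < f t -> s < t.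
Proof.
  intros H Hs Ht Hf. destruct (Rlt_or_le s t) as [E|E]; auto.
  pose proof (incr_on_le I f t s H Ht Hs E). lra.
Qed.

Lemma decr_on_rev I f s t : decr_on I f -> I s -> I t -> f t < f s -> s < t.
Proof.
  intros H Hs Ht Hf. destruct (Rlt_or_le s t) as [E|E]; auto.
  pose proof (decr_on_le I f t s H Ht Hs E). lra.
Qed.

Lemma incr_on_inj I f s t : incr_on I f -> I s -> I t -> f s = f t -> s = t.
Proof.
  intros H Hs Ht E. destruct (Rtotal_order s t) as [L|[L|L]]; auto.
  - specialize (H s t Hs Ht L). lra.
  - specialize (H t s Ht Hs L). lra.
Qed.

Lemma decr_on_inj I f s t : decr_on I f -> I s -> I t -> f s = f t -> s = t.
Proof.
  intros H Hs Ht E. destruct (Rtotal_order s t) as [L|[L|L]]; auto.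
  - specialize (H s t Hs Ht L). lra.
  - specialize (H t s Ht Hs L). lra.
Qed.

Lemma derivable_continuous f x l : derivable_pt_lim f x l -> continuity_pt f x.
Proof. intros H. apply derivable_continuous_pt. exists l. exact H. Qed.

Lemma lt_of_deriv_pos f f' x y : x < y ->
  (forall w, x <= w <= y -> derivable_pt_lim f w (f' w)) ->
  (forall w, x < w < y -> 0 < f' w) -> f x < f y.
Proof.
  intros Hxy Hd Hp. destruct (MVT_cor2 f f' x y Hxy Hd) as [z [Hz1 Hz2]].
  specialize (Hp z Hz2). nra.
Qed.

Lemma lt_of_deriv_pos_but f f' e x y : x < y ->
  (forall w, x <= w <= y -> derivable_pt_lim f w (f' w)) ->
  (forall w, x < w < y -> w <> e -> 0 < f' w) -> f x < f y.
Proof.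
  intros Hxy Hd Hp.
  assert (piece : forall s t, x <= s -> s < t -> t <= y -> ~ (s < e < t) -> f s < f t).
  { intros s t Hs Hst Ht He. apply lt_of_deriv_pos with f'; [lra | |].
    - intros w Hw. apply Hd. lra.
    - intros w Hw. apply Hp; lra. }
  destruct (Rlt_dec x e) as [H1|H1]; [destruct (Rlt_dec e y) as [H2|H2]|].
  - apply Rlt_trans with (f e); apply piece; lra.
  - apply piece; lra.
  - apply piece; lra.
Qed.

Lemma incr_on_deriv (I : R -> Prop) f f' e :
  (forall s t w, I s -> I t -> s <= w <= t -> I w) ->
  (forall w, I w -> derivable_pt_lim f w (f' w)) ->
  (forall s t w, I s -> I t -> s < w < t -> w <> e -> 0 < f' w) -> incr_on I f.
Proof.
  intros Hconv Hd Hp s t Hs Ht Hst.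
  apply lt_of_deriv_pos_but with f' e; auto.
  - intros w Hw. apply Hd, (Hconv s t); auto.
  - intros w Hw Hne. apply (Hp s t); auto.
Qed.

Lemma decr_on_deriv (I : R -> Prop) f f' e :
  (forall s t w, I s -> I t -> s <= w <= t -> I w) ->
  (forall w, I w -> derivable_pt_lim f w (f' w)) ->
  (forall s t w, I s -> I t -> s < w < t -> w <> e -> f' w < 0) -> decr_on I f.
Proof.
  intros Hconv Hd Hp s t Hs Ht Hst.
  enough (- f s < - f t) by lra.
  apply (incr_on_deriv I (fun w => - f w) (fun w => - f' w) e); auto.
  - intros w Hw. apply derivable_pt_lim_opp, Hd, Hw.
  - intros s' t' w Hs' Ht' Hw Hne. specialize (Hp s' t' w Hs' Ht' Hw Hne). lra.
Qed.

Lemma inverse_continuous_incr f h lb ub y : lb < ub ->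
  incr_on (fun w => lb <= w <= ub) f -> (forall w, lb <= w <= ub -> continuity_pt f w) ->
  (forall w, lb <= w <= ub -> h (f w) = w) -> f lb < y < f ub -> continuity_pt h y.
Proof.
  intros Hlu Hi Hc Hinv Hy.
  apply (continuity_pt_recip_prelim f h lb ub); [exact Hlu | | | exact Hc | exact Hy].
  - intros s t Hs Hst Ht. apply Hi; lra.
  - intros w Hw. apply Hinv, Hw.
Qed.

Lemma inverse_continuous_decr f h lb ub y : lb < ub ->
  decr_on (fun w => lb <= w <= ub) f -> (forall w, lb <= w <= ub -> continuity_pt f w) ->
  (forall w, lb <= w <= ub -> h (f w) = w) -> f ub < y < f lb -> continuity_pt h y.
Proof.
  intros Hlu Hd Hc Hinv Hy.
  assert (Hopp : continuity_pt (fun z => h (- z)) (- y)).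
  { apply (inverse_continuous_incr (fun w => - f w) _ lb ub); auto; try lra.
    - intros s t Hs Ht Hst. specialize (Hd s t Hs Ht Hst). lra.
    - intros w Hw. apply continuity_pt_opp, Hc, Hw.
    - intros w Hw. rewrite Ropp_involutive. apply Hinv, Hw. }
  apply continuity_pt_ext with (comp (fun z => h (- z)) Ropp).
  - intros z. unfold comp. rewrite Ropp_involutive. reflexivity.
  - apply continuity_pt_comp; [apply continuity_pt_opp, continuity_pt_id | exact Hopp].
Qed.

Lemma ivt_up f x y v : x < y -> (forall w, x <= w <= y -> continuity_pt f w) ->
  f x < v -> v < f y -> exists z, x < z < y /\ f z = v.
Proof.
  intros Hxy Hc H1 H2.
  destruct (IVT_interv (fun u => f u - v) x y) as [z [Hz1 Hz2]]; auto; try lra.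
  - intros u Hu. apply continuity_pt_minus; auto. apply continuity_pt_const. intros ? ?; auto.
  - exists z. assert (z <> x) by (intros ->; lra). assert (z <> y) by (intros ->; lra).
    split; lra.
Qed.

Lemma ivt_down f x y v : x < y -> (forall w, x <= w <= y -> continuity_pt f w) ->
  v < f x -> f y < v -> exists z, x < z < y /\ f z = v.
Proof.
  intros Hxy Hc H1 H2.
  destruct (ivt_up (fun u => - f u) x y (- v)) as [z [Hz1 Hz2]]; auto; try lra.
  - intros w Hw. apply continuity_pt_opp. auto.
  - exists z. split; auto. lra.
Qed.

Lemma peak_is_max f x y z v :
  incr_on (fun s => x <= s <= y) f -> decr_on (fun s => y <= s <= z) f ->
  x <= y <= z -> x <= v <= z -> f v <= f y.
Proof.
  intros Hi Hd Hy Hv. destruct (Rle_or_lt v y).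
  - apply (incr_on_le _ f v y Hi); lra.
  - apply (decr_on_le _ f y v Hd); lra.
Qed.

Lemma not_local_max_right f v w : 0 <= v -> v < w -> w <= 1 ->
  (forall w', v < w' <= w -> f v < f w') -> ~ is_local_max01 f v.
Proof.
  intros H0 H1 H2 Hup [_ [d [Hd H]]].
  set (w' := Rmin w (v + d / 2)).
  assert (v < w' <= w) by (split; [apply Rmin_glb_lt; lra | apply Rmin_l]).
  assert (w' <= v + d / 2) by apply Rmin_r.
  assert (f w' <= f v) by (apply H; [lra | rewrite Rabs_right; lra]).
  specialize (Hup w' H3). lra.
Qed.

Lemma not_local_max_left f v w : 0 <= w -> w < v -> v <= 1 ->
  (forall w', w <= w' < v -> f v < f w') -> ~ is_local_max01 f v.
Proof.
  intros H0 H1 H2 Hup [_ [d [Hd H]]].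
  set (w' := Rmax w (v - d / 2)).
  assert (w <= w' < v) by (split; [apply Rmax_l | apply Rmax_lub_lt; lra]).
  assert (v - d / 2 <= w') by apply Rmax_r.
  assert (f w' <= f v) by (apply H; [lra | rewrite Rabs_left; lra]).
  specialize (Hup w' H3). lra.
Qed.

Definition one_hump (f : R -> R) u :=
  0 < u < 1 /\ incr_on (fun s => 0 <= s <= u) f /\ decr_on (fun s => u <= s <= 1) f.

Definition two_humps (f : R -> R) u1 m u2 :=
  0 < u1 < m /\ m < u2 < 1 /\
  incr_on (fun s => 0 <= s <= u1) f /\ decr_on (fun s => u1 <= s <= m) f /\
  incr_on (fun s => m <= s <= u2) f /\ decr_on (fun s => u2 <= s <= 1) f.

Lemma one_hump_max f u : one_hump f u ->
  is_local_max01 f u /\ is_global_max01 f u /\ forall v, is_local_max01 f v -> v = u.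
Proof.
  intros [Hu [Hi Hd]].
  assert (G : is_global_max01 f u)
    by (split; [lra | intros v Hv; apply (peak_is_max f 0 u 1); auto; lra]).
  split; [|split; auto].
  - split; [lra|]. exists 1. split; [lra|]. intros v Hv _. apply G, Hv.
  - intros v Hv. pose proof (proj1 Hv).
    destruct (Rtotal_order v u) as [E|[E|E]]; auto; exfalso.
    + apply (not_local_max_right f v u); try lra; [|exact Hv].
      intros w' Hw'. apply Hi; lra.
    + apply (not_local_max_left f v u); try lra; [|exact Hv].
      intros w' Hw'. apply Hd; lra.
Qed.

Lemma two_humps_max f u1 m u2 : two_humps f u1 m u2 ->
  is_local_max01 f u1 /\ is_local_max01 f u2 /\
  (forall v, is_local_max01 f v -> v = u1 \/ v = u2) /\
  (forall v, 0 <= v <= m -> f v <= f u1) /\ (forall v, m <= v <= 1 -> f v <= f u2).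
Proof.
  intros [H1 [H2 [I1 [D1 [I2 D2]]]]].
  assert (M1 : forall v, 0 <= v <= m -> f v <= f u1)
    by (intros v Hv; apply (peak_is_max f 0 u1 m); auto; lra).
  assert (M2 : forall v, m <= v <= 1 -> f v <= f u2)
    by (intros v Hv; apply (peak_is_max f m u2 1); auto; lra).
  split; [|split; [|split; [|split; auto]]].
  - split; [lra|]. exists (m - u1). split; [lra|].
    intros v Hv Ha. apply Rabs_def2 in Ha. apply M1. lra.
  - split; [lra|]. exists (u2 - m). split; [lra|].
    intros v Hv Ha. apply Rabs_def2 in Ha. apply M2. lra.
  - intros v Hv. pose proof (proj1 Hv).
    destruct (Rtotal_order v u1) as [Ha|[Ha|Ha]]; [exfalso | left; auto |].
    { apply (not_local_max_right f v u1); try lra; [|exact Hv].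
      intros w' Hw'. apply I1; lra. }
    destruct (Rle_or_lt v m) as [Hb|Hb].
    { exfalso. apply (not_local_max_left f v u1); try lra; [|exact Hv].
      intros w' Hw'. apply D1; lra. }
    destruct (Rtotal_order v u2) as [Hc|[Hc|Hc]]; [exfalso | right; auto | exfalso].
    + apply (not_local_max_right f v u2); try lra; [|exact Hv].
      intros w' Hw'. apply I2; lra.
    + apply (not_local_max_left f v u2); try lra; [|exact Hv].
      intros w' Hw'. apply D2; lra.
Qed.

Definition values_on (f : R -> R) lo hi (y : R) := exists v, lo <= v <= hi /\ y = f v.
Definition sup_on (f : R -> R) lo hi := epsilon (inhabits 0) (is_lub (values_on f lo hi)).

Lemma sup_on_spec f lo hi B : lo <= hi -> (forall v, lo <= v <= hi -> f v <= B) ->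
  is_lub (values_on f lo hi) (sup_on f lo hi).
Proof.
  intros Hlh HB. unfold sup_on. apply epsilon_spec.
  destruct (completeness (values_on f lo hi)) as [m Hm].
  - exists B. intros y [v [Hv ->]]. auto.
  - exists (f lo), lo. split; [lra | auto].
  - exists m. exact Hm.
Qed.

Lemma sup_on_ge f lo hi B v : lo <= hi -> (forall v, lo <= v <= hi -> f v <= B) ->
  lo <= v <= hi -> f v <= sup_on f lo hi.
Proof. intros H1 H2 Hv. apply (sup_on_spec f lo hi B H1 H2). exists v. auto. Qed.

Lemma sup_on_le f lo hi B : lo <= hi -> (forall v, lo <= v <= hi -> f v <= B) ->
  sup_on f lo hi <= B.
Proof.
  intros H1 H2. apply (sup_on_spec f lo hi B H1 H2). intros y [v [Hv ->]]. auto.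
Qed.

(** Tactics for the computations below: [simpl_INR] rewrites the [INR] of
    successors into the real exponents [pR], [qR]; [positivity] and [nonzero]
    discharge sign conditions of products of positive factors. *)

Ltac fold_INR := repeat match goal with
  |- context [match ?n with 0%nat => 1 | S _ => INR ?n + 1 end] =>
    change (match n with 0%nat => 1 | S _ => INR n + 1 end) with (INR (S n)) end.
Ltac pose_INR := repeat (match goal with |- context [INR ?n] =>
  lazymatch goal with H : 0 <= INR n |- _ => fail | _ => assert (0 <= INR n) by apply pos_INR end end).
Ltac positivity :=
  repeat (apply Rmult_lt_0_compat || apply pow_lt || apply Rinv_0_lt_compat); pose_INR; try lra.
Ltac nonzero := repeat split; try apply pow_nonzero; try lra; pose_INR; try lra.

(** The model.  We write p = a + 2 and q = c + a + 3 (so p >= 2 and q > p);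
    [pR] and [qR] are p and q as real numbers. *)

Section Model.

Variables (a c : nat) (b3 : R).

Definition pR := INR a + 2.
Definition qR := INR a + INR c + 3.

Lemma pR_ge2 : 2 <= pR.
Proof. unfold pR. pose proof (pos_INR a). lra. Qed.

Lemma qR_gt_pR : pR + 1 <= qR.
Proof. unfold pR, qR. pose proof (pos_INR c). lra. Qed.

Lemma INR_p : INR (S (S a)) = pR.
Proof. unfold pR. rewrite !S_INR. ring. Qed.

Lemma INR_q : INR (S (S (S (c + a)))) = qR.
Proof. unfold qR. rewrite !S_INR, plus_INR. ring. Qed.

Ltac simpl_INR := fold_INR; cbn [pred pow]; rewrite ?S_INR, ?plus_INR, ?pow_add;
  unfold pR, qR;
  repeat match goal with |- context [(?x + - ?y)] => change (x + - y) with (x - y) end.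

Definition lF b1 b2 := lfun (S (S a)) (S (S (S (c + a)))) b3 b1 b2.
Definition l_smooth b1 b2 u :=
  b1 * u + b2 * u ^ S (S a) + b3 * u ^ S (S (S (c + a)))
  - /2 * (u * ln u) - /2 * ((1 - u) * ln (1 - u)).

(* l' = b1 - g. *)
Definition g b2 u :=
  /2 * (ln u - ln (1 - u)) - qR * b3 * u ^ S (S (c + a)) - pR * b2 * u ^ S a.

(* g' = p (p-1) u^(p-2) (beta - b2): beta(u) is the value of b2 making u a
   critical point of g. *)
Definition beta u :=
  / (pR * (pR - 1)) * (/ (2 * u ^ S a * (1 - u)) - qR * (qR - 1) * b3 * u ^ S c).

(* beta' has the sign of kappa - b3; kappa = num / den. *)
Definition kappa_den u := 2 * qR * (qR - 1) * (qR - pR) * u ^ S (S (c + a)) * (1 - u) ^ 2.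
Definition kappa u := (pR * u - (pR - 1)) / kappa_den u.

(* The parametrized boundary curve u |-> (B1 u, beta u) of the phase diagram. *)
Definition B1 u := g (beta u) u.

Definition dbeta u := qR * (qR - 1) * (qR - pR) * u ^ c / (pR * (pR - 1)) * (kappa u - b3).

Lemma kappa_den_pos u : 0 < u < 1 -> 0 < kappa_den u.
Proof. intros. pose proof pR_ge2. pose proof qR_gt_pR. unfold kappa_den. positivity. Qed.

Lemma dbeta_factor_pos u : 0 < u -> 0 < qR * (qR - 1) * (qR - pR) * u ^ c / (pR * (pR - 1)).
Proof. intros. pose proof pR_ge2. pose proof qR_gt_pR. unfold Rdiv. positivity. Qed.

Lemma derive_l b1 b2 u : 0 < u < 1 -> derivable_pt_lim (l_smooth b1 b2) u (b1 - g b2 u).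
Proof.
  intros Hu. apply is_derive_Reals. unfold l_smooth, g.
  auto_derive; [repeat split; lra|]. simpl_INR. field. lra.
Qed.

Definition dg b2 u := pR * (pR - 1) * u ^ a * (beta u - b2).

Lemma derive_g b2 u : 0 < u < 1 -> derivable_pt_lim (g b2) u (dg b2 u).
Proof.
  intros Hu. apply is_derive_Reals. unfold g, dg, beta.
  auto_derive; [repeat split; lra|]. simpl_INR. field. nonzero.
Qed.

Lemma derive_beta u : 0 < u < 1 -> derivable_pt_lim beta u (dbeta u).
Proof.
  intros Hu. pose proof (kappa_den_pos u Hu). apply is_derive_Reals.
  unfold dbeta, kappa, kappa_den, beta in *.
  auto_derive; [repeat split; auto; apply Rgt_not_eq; positivity|].
  simpl_INR. field. nonzero.
Qed.

Lemma derive_B1 u : 0 < u < 1 -> derivable_pt_lim B1 u (- pR * u ^ S a * dbeta u).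
Proof.
  intros Hu. pose proof (kappa_den_pos u Hu). apply is_derive_Reals.
  unfold B1, g, dbeta, kappa, kappa_den, beta in *.
  auto_derive; [repeat split; auto; try lra; apply Rgt_not_eq; positivity|].
  simpl_INR. field. nonzero.
Qed.


Definition kappa_num u :=
  pR * qR * u ^ 2 - (2 * pR * qR - pR - qR - 1) * u + (pR - 1) * (qR - 1).

Definition dkappa u :=
  kappa_num u / (2 * qR * (qR - 1) * (qR - pR) * u ^ S (S (S (c + a))) * (1 - u) ^ 3).

Lemma derive_kappa u : 0 < u < 1 -> derivable_pt_lim kappa u (dkappa u).
Proof.
  intros Hu. pose proof (kappa_den_pos u Hu). apply is_derive_Reals.
  unfold kappa, dkappa, kappa_num, kappa_den in *.
  auto_derive; [repeat split; auto; apply Rgt_not_eq; auto|].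
  simpl_INR. field. nonzero.
Qed.

Lemma kappa_continuous u : 0 < u < 1 -> continuity_pt kappa u.
Proof. intros Hu. eapply derivable_continuous, derive_kappa, Hu. Qed.

Lemma u0_eq_kappa u : u0_eq (S (S a)) (S (S (S (c + a)))) b3 u <-> b3 = kappa u.
Proof.
  unfold u0_eq, kappa, kappa_den. replace (S (S (S (c + a))) - 1)%nat with (S (S (c + a))) by lia.
  rewrite INR_p, INR_q. tauto.
Qed.

(* The hypothesis q <= 5p - 1, in terms of a and c. *)
Hypothesis Hq : INR c <= 4 * INR a + 6.

(* For p + 1 <= q <= 5p - 1 the discriminant (p+q+1)^2 - 8pq of kappa_num is
   nonpositive, so kappa_num vanishes at most at its vertex. *)
Lemma kappa_num_pos u :
  u <> (2 * pR * qR - pR - qR - 1) / (2 * pR * qR) -> 0 < kappa_num u.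
Proof.
  intros Hu. unfold kappa_num.
  pose proof pR_ge2 as HP. pose proof qR_gt_pR as HQ.
  assert (HQ5 : qR <= 5 * pR - 1) by (unfold pR, qR in *; lra).
  set (P := pR) in *. set (Q := qR) in *. set (B := 2 * P * Q - P - Q - 1) in *.
  assert (Hdisc : (P + Q + 1) ^ 2 - 8 * P * Q <= 0).
  { assert (0 <= (Q - P - 1) * (5 * P - 1 - Q)) by (apply Rmult_le_pos; lra). nra. }
  assert (Hne : 2 * P * Q * u - B <> 0).
  { intro E. apply Hu. field_simplify_eq; [|nra]. lra. }
  assert (4 * P * Q * (P * Q * u ^ 2 - B * u + (P - 1) * (Q - 1))
          = (2 * P * Q * u - B) ^ 2 - ((P + Q + 1) ^ 2 - 8 * P * Q)) by (unfold B; ring).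
  assert (0 < (2 * P * Q * u - B) ^ 2) by (simpl; nra).
  nra.
Qed.

Lemma kappa_incr : incr_on (fun u => 0 < u < 1) kappa.
Proof.
  apply (incr_on_deriv _ kappa dkappa ((2 * pR * qR - pR - qR - 1) / (2 * pR * qR)));
    [intros; lra | apply derive_kappa |].
  intros s t w Hs Ht Hw Hne. unfold dkappa. apply Rdiv_lt_0_compat; [apply kappa_num_pos, Hne|].
  pose proof pR_ge2. pose proof qR_gt_pR. positivity.
Qed.

Lemma quotient_below N D b e : 0 < D -> D * (Rabs b + 1) <= e -> N <= - e -> N / D < b.
Proof.
  intros HD Hb HN. apply Rlt_div_l; [exact HD|].
  pose proof (Rabs_maj2 b). pose proof (Rabs_pos b). nra.
Qed.

Lemma quotient_above N D b e : 0 < D -> D * (Rabs b + 1) <= e -> e <= N -> b < N / D.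
Proof.
  intros HD Hb HN. apply Rlt_div_r; [exact HD|].
  pose proof (Rle_abs b). pose proof (Rabs_pos b). nra.
Qed.

Lemma kappa_den_le u : 0 < u < 1 ->
  kappa_den u <= 2 * qR * (qR - 1) * (qR - pR) * (u * (1 - u)).
Proof.
  intros Hu. pose proof pR_ge2. pose proof qR_gt_pR. unfold kappa_den.
  assert (0 < 2 * qR * (qR - 1) * (qR - pR)) by positivity.
  assert (u ^ S (S (c + a)) <= u) by (apply pow_le_self; lra).
  assert (0 <= u ^ S (S (c + a))) by (apply pow_le; lra).
  assert (Hsq : (1 - u) ^ 2 <= 1 - u) by (simpl; nra).
  rewrite Rmult_assoc. apply Rmult_le_compat_l; [lra|].
  apply Rmult_le_compat; auto; [simpl; nra].
Qed.

Lemma kappa_below : exists x, 0 < x < 1 /\ kappa x < b3.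
Proof.
  pose proof pR_ge2. pose proof qR_gt_pR. pose proof (Rabs_pos b3).
  set (K := 2 * qR * (qR - 1) * (qR - pR)).
  assert (HK : 0 < K) by (unfold K; positivity).
  set (x := Rmin ((pR - 1) / (2 * pR)) ((pR - 1) / (2 * K * (Rabs b3 + 1)))).
  assert (Hx1 : x <= (pR - 1) / (2 * pR)) by apply Rmin_l.
  assert (Hx2 : x <= (pR - 1) / (2 * K * (Rabs b3 + 1))) by apply Rmin_r.
  assert (Hx0 : 0 < x) by (apply Rmin_glb_lt; unfold Rdiv; positivity).
  assert ((pR - 1) / (2 * pR) < 1) by (apply Rlt_div_l; lra).
  exists x. split; [lra|].
  pose proof (kappa_den_le x ltac:(lra)) as HD. pose proof (kappa_den_pos x ltac:(lra)).
  fold K in HD. assert (HDx : kappa_den x <= K * x) by nra.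
  apply (quotient_below _ _ _ ((pR - 1) / 2)); auto.
  - assert (x * (2 * K * (Rabs b3 + 1)) <= pR - 1) by (apply Rle_div_r; [positivity | exact Hx2]).
    apply Rle_trans with (K * x * (Rabs b3 + 1)); [apply Rmult_le_compat_r|]; lra.
  - assert (x * (2 * pR) <= pR - 1) by (apply Rle_div_r; [lra | exact Hx1]). lra.
Qed.

Lemma kappa_above : exists y, 0 < y < 1 /\ b3 < kappa y.
Proof.
  pose proof pR_ge2. pose proof qR_gt_pR. pose proof (Rabs_pos b3).
  set (K := 2 * qR * (qR - 1) * (qR - pR)).
  assert (HK : 0 < K) by (unfold K; positivity).
  set (t := Rmin (/ (2 * pR)) (/ (2 * K * (Rabs b3 + 1)))).
  assert (Ht1 : t <= / (2 * pR)) by apply Rmin_l.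
  assert (Ht2 : t <= / (2 * K * (Rabs b3 + 1))) by apply Rmin_r.
  assert (Ht0 : 0 < t) by (apply Rmin_glb_lt; positivity).
  assert (/ (2 * pR) <= / 4) by (apply Rinv_le_contravar; lra).
  exists (1 - t). split; [lra|].
  pose proof (kappa_den_le (1 - t) ltac:(lra)) as HD. pose proof (kappa_den_pos (1 - t) ltac:(lra)).
  fold K in HD. assert (HDt : kappa_den (1 - t) <= K * t) by nra.
  apply (quotient_above _ _ _ (/ 2)); auto.
  - assert (t * (2 * K * (Rabs b3 + 1)) <= 1)
      by (apply Rle_div_r; [positivity | unfold Rdiv; lra]).
    apply Rle_trans with (K * t * (Rabs b3 + 1)); [apply Rmult_le_compat_r|]; lra.
  - assert (t * (2 * pR) <= 1) by (apply Rle_div_r; [lra | unfold Rdiv; lra]). lra.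
Qed.

Lemma kappa_root : exists u0, 0 < u0 < 1 /\ kappa u0 = b3.
Proof.
  destruct kappa_below as [x [Hx Hkx]]. destruct kappa_above as [y [Hy Hky]].
  assert (x < y) by (apply (incr_on_rev _ kappa x y kappa_incr); auto; lra).
  destruct (ivt_up kappa x y b3) as [z [Hz Hkz]]; auto.
  - intros w Hw. apply kappa_continuous. lra.
  - exists z. split; [lra | auto].
Qed.

Lemma g_continuous b2 u : 0 < u < 1 -> continuity_pt (g b2) u.
Proof. intros Hu. eapply derivable_continuous, derive_g, Hu. Qed.

Lemma beta_continuous u : 0 < u < 1 -> continuity_pt beta u.
Proof. intros Hu. eapply derivable_continuous, derive_beta, Hu. Qed.

Lemma B1_continuous u : 0 < u < 1 -> continuity_pt B1 u.
Proof. intros Hu. eapply derivable_continuous, derive_B1, Hu. Qed.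

Lemma beta_large M : exists m, 0 < m /\
  forall u, 0 < u < 1 -> u * (1 - u) <= m -> M < beta u.
Proof.
  pose proof pR_ge2. pose proof qR_gt_pR. pose proof (Rabs_pos M). pose proof (Rabs_pos b3).
  assert (0 < pR * (pR - 1)) by positivity.
  assert (0 <= qR * (qR - 1) * Rabs b3) by (apply Rmult_le_pos; nra).
  set (K := pR * (pR - 1) * Rabs M + qR * (qR - 1) * Rabs b3 + 1).
  assert (HK : 0 < K) by (unfold K; nra).
  exists (/ (2 * K)). split; [positivity|]. intros u Hu Hm.
  assert (0 < u ^ S a) by (apply pow_lt; lra).
  assert (u ^ S a <= u) by (apply pow_le_self; lra).
  assert (Hden : K <= / (2 * u ^ S a * (1 - u))).
  { rewrite <- (Rinv_inv K). apply Rinv_le_contravar; [positivity|].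
    replace (/ K) with (2 * / (2 * K)) by (field; lra). nra. }
  assert (qR * (qR - 1) * b3 * u ^ S c <= qR * (qR - 1) * Rabs b3).
  { pose proof (monomial_bound b3 u (S c) ltac:(lra)).
    rewrite Rmult_assoc. apply Rmult_le_compat_l; nra. }
  unfold beta. apply Rmult_lt_reg_l with (pR * (pR - 1)); [lra|].
  rewrite <- Rmult_assoc, Rinv_r, Rmult_1_l by lra.
  pose proof (Rle_abs M). unfold K in Hden. nra.
Qed.

Lemma B1_formula u : 0 < u < 1 ->
  B1 u = /2 * (ln u - ln (1 - u)) - / (2 * (pR - 1) * (1 - u))
         + b3 * u ^ S (S (c + a)) * (qR * (qR - 1) / (pR - 1) - qR).
Proof. intros Hu. pose proof pR_ge2. unfold B1, g, beta. simpl_INR. field. nonzero. Qed.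

Lemma B1_remainder_bound u : 0 < u < 1 ->
  b3 * u ^ S (S (c + a)) * (qR * (qR - 1) / (pR - 1) - qR)
  <= Rabs (qR * (qR - 1) / (pR - 1) - qR) * Rabs b3.
Proof.
  intros Hu. set (C := qR * (qR - 1) / (pR - 1) - qR).
  pose proof (monomial_bound (C * b3) u (S (S (c + a))) ltac:(lra)).
  rewrite Rabs_mult in H. replace (b3 * u ^ S (S (c + a)) * C) with (C * b3 * u ^ S (S (c + a)))
    by ring. lra.
Qed.

Lemma B1_below_near0 x : exists d, 0 < d /\ forall u, 0 < u <= d -> B1 u < x.
Proof.
  pose proof pR_ge2.
  set (K := Rabs (qR * (qR - 1) / (pR - 1) - qR) * Rabs b3).
  destruct (ln_small (2 * (x - K - 1))) as [d [Hd Hl]].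
  exists d. split; [lra|]. intros u Hu.
  rewrite B1_formula by lra. specialize (Hl u Hu).
  pose proof (ln_ge_half (1 - u) ltac:(lra)).
  assert (0 < / (2 * (pR - 1) * (1 - u))) by positivity.
  pose proof (B1_remainder_bound u ltac:(lra)) as Hrem. fold K in Hrem. lra.
Qed.

Lemma B1_below_near1 x : exists d, 0 < d /\ forall u, 1 - d <= u < 1 -> B1 u < x.
Proof.
  pose proof pR_ge2.
  set (K := Rabs (qR * (qR - 1) / (pR - 1) - qR) * Rabs b3).
  set (lam := / (2 * (pR - 1))).
  assert (Hlam : 0 < lam) by (unfold lam; positivity).
  set (C0 := - (1 + ln lam) / 2 + K).
  set (R0 := Rabs (C0 - x) + 1).
  assert (HR0 : 0 < R0) by (pose proof (Rabs_pos (C0 - x)); unfold R0; lra).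
  assert (HC0 : C0 - x < R0) by (pose proof (Rle_abs (C0 - x)); unfold R0; lra).
  clearbody R0.
  set (d := Rmin (/2) (lam / (2 * R0))).
  assert (Hd1 : d <= /2) by apply Rmin_l.
  assert (Hd2 : d <= lam / (2 * R0)) by apply Rmin_r.
  assert (Hd : 0 < d) by (apply Rmin_glb_lt; [lra | unfold Rdiv; positivity]).
  exists d. split; [exact Hd|]. intros u Hu. set (t := 1 - u).
  assert (Ht : 0 < t <= d) by (unfold t; lra).
  rewrite B1_formula by lra. replace (1 - u) with t by reflexivity.
  assert (ln u <= 0) by (left; apply ln_neg; lra).
  (* - ln t <= lam / t - 1 - ln lam, from ln y <= y - 1 at y = lam / t *)
  assert (Hl : - ln t <= lam / t - 1 - ln lam).
  { pose proof (ln_le_pred (lam / t) ltac:(unfold Rdiv; positivity)) as Hy.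
    unfold Rdiv in *. rewrite ln_mult, ln_Rinv in Hy by positivity. lra. }
  assert (/ (2 * (pR - 1) * t) = lam / t) by (unfold lam; field; lra).
  pose proof (B1_remainder_bound u ltac:(lra)) as Hrem. fold K in Hrem.
  assert (t * (2 * R0) <= lam) by (apply Rle_div_r; lra).
  assert (R0 * 2 <= lam / t) by (apply (Rle_div_r (R0 * 2) lam t); lra).
  unfold C0 in HC0. lra.
Qed.

Lemma g_below_near0 b2 x : exists d, 0 < d /\ forall u, 0 < u <= d -> g b2 u < x.
Proof.
  set (K := Rabs (qR * b3) + Rabs (pR * b2)).
  destruct (ln_small (2 * (x - K - 1))) as [d [Hd Hl]].
  exists d. split; [lra|]. intros u Hu. specialize (Hl u Hu).
  pose proof (ln_ge_half (1 - u) ltac:(lra)).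
  pose proof (monomial_bound (qR * b3) u (S (S (c + a))) ltac:(lra)).
  pose proof (monomial_bound (pR * b2) u (S a) ltac:(lra)).
  unfold g, K in *. lra.
Qed.

Lemma g_above_near1 b2 x : exists d, 0 < d /\ forall u, 1 - d <= u < 1 -> x < g b2 u.
Proof.
  set (K := Rabs (qR * b3) + Rabs (pR * b2)).
  destruct (ln_small (- 2 * (x + K + 1))) as [d [Hd Hl]].
  exists d. split; [lra|]. intros u Hu. specialize (Hl (1 - u) ltac:(lra)).
  pose proof (ln_ge_half u ltac:(lra)).
  pose proof (monomial_bound (qR * b3) u (S (S (c + a))) ltac:(lra)).
  pose proof (monomial_bound (pR * b2) u (S a) ltac:(lra)).
  unfold g, K in *. lra.
Qed.

Lemma g_below_left b2 v z : 0 < z -> exists s, 0 < s < z /\ s < 1/2 /\ g b2 s < v.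
Proof.
  intros Hz. destruct (g_below_near0 b2 v) as [d [Hd Hl]].
  set (s := Rmin d (Rmin (z / 2) (1 / 4))).
  assert (s <= d) by apply Rmin_l.
  assert (s <= z / 2 /\ s <= 1 / 4)
    by (split; eapply Rle_trans; [apply Rmin_r | apply Rmin_l | apply Rmin_r | apply Rmin_r]).
  assert (0 < s) by (repeat apply Rmin_glb_lt; lra).
  exists s. split; [|split]; try lra. apply Hl. lra.
Qed.

Lemma g_above_right b2 v z : z < 1 -> exists t, z < t < 1 /\ 1/2 < t /\ v < g b2 t.
Proof.
  intros Hz. destruct (g_above_near1 b2 v) as [d [Hd Hl]].
  set (t := Rmax (1 - d) (Rmax ((1 + z) / 2) (3 / 4))).
  assert (1 - d <= t) by apply Rmax_l.
  assert ((1 + z) / 2 <= t /\ 3 / 4 <= t)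
    by (split; eapply Rle_trans; [apply Rmax_l | apply Rmax_r | apply Rmax_r | apply Rmax_r]).
  assert (t < 1) by (repeat apply Rmax_lub_lt; lra).
  exists t. split; [|split]; try lra. apply Hl. lra.
Qed.

Lemma lF_smooth b1 b2 u : 0 < u < 1 -> lF b1 b2 u = l_smooth b1 b2 u.
Proof. intros Hu. unfold lF, lfun, l_smooth. rewrite !xlnx_pos by lra. ring. Qed.

Lemma lF_at0 b1 b2 : lF b1 b2 0 = 0.
Proof.
  unfold lF, lfun, xlnx. destruct (Rle_dec 0 0); [|lra].
  destruct (Rle_dec (1 - 0) 0); [lra|]. rewrite Rminus_0_r, ln_1. simpl. ring.
Qed.

Lemma lF_at1 b1 b2 : lF b1 b2 1 = b1 + b2 + b3.
Proof.
  unfold lF, lfun, xlnx. destruct (Rle_dec (1 - 1) 0); [|lra].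
  destruct (Rle_dec 1 0); [lra|]. rewrite ln_1, !pow1. ring.
Qed.

(* The entropy term forces l to increase right after 0 ... *)
Lemma lF_rises_from0 b1 b2 : exists d, 0 < d /\ forall v, 0 < v <= d -> lF b1 b2 0 < lF b1 b2 v.
Proof.
  set (K := Rabs b1 + Rabs b2 + Rabs b3).
  destruct (ln_small (-2 * K - 2)) as [d [Hd Hl]].
  exists d. split; [lra|]. intros v Hv. specialize (Hl v Hv).
  rewrite lF_at0, lF_smooth by lra. unfold l_smooth.
  assert (ln (1 - v) < 0) by (apply ln_neg; lra).
  assert (0 <= - ((1 - v) * ln (1 - v))) by nra.
  pose proof (monomial_lb0 b2 v (S a) ltac:(lra)).
  pose proof (monomial_lb0 b3 v (S (S (c + a))) ltac:(lra)).
  pose proof (Rle_abs b1). pose proof (Rabs_maj2 b1).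
  assert (- K * v - /2 * (v * ln v) >= v) by (unfold K in *; nra).
  unfold K in *. nra.
Qed.

(* ... and to decrease right before 1. *)
Lemma lF_falls_to1 b1 b2 : exists d, 0 < d /\ forall v, 1 - d <= v < 1 -> lF b1 b2 1 < lF b1 b2 v.
Proof.
  set (K := Rabs b1 + Rabs b2 * INR (S (S a)) + Rabs b3 * INR (S (S (S (c + a))))).
  destruct (ln_small (-2 * K - 2)) as [d [Hd Hl]].
  exists d. split; [lra|]. intros v Hv. specialize (Hl (1 - v) ltac:(lra)).
  rewrite lF_at1, lF_smooth by lra. unfold l_smooth.
  assert (ln v < 0) by (apply ln_neg; lra).
  assert (0 <= - (v * ln v)) by nra.
  pose proof (monomial_lb1 b2 v (S (S a)) ltac:(lra)).
  pose proof (monomial_lb1 b3 v (S (S (S (c + a)))) ltac:(lra)).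
  pose proof (Rle_abs b1). pose proof (Rabs_maj2 b1).
  assert (- K * (1 - v) - /2 * ((1 - v) * ln (1 - v)) >= 1 - v) by (unfold K in *; nra).
  unfold K in *. nra.
Qed.

Lemma lF_lt_inside b1 b2 s t e : 0 < s -> s < t -> t < 1 ->
  (forall w, s < w < t -> w <> e -> g b2 w < b1) -> lF b1 b2 s < lF b1 b2 t.
Proof.
  intros Hs Hst Ht H. rewrite !lF_smooth by lra.
  apply (lt_of_deriv_pos_but _ (fun u => b1 - g b2 u) e); [exact Hst | |].
  - intros w Hw. apply derive_l. lra.
  - intros w Hw Hne. specialize (H w Hw Hne). lra.
Qed.

Lemma lF_gt_inside b1 b2 s t e : 0 < s -> s < t -> t < 1 ->
  (forall w, s < w < t -> w <> e -> b1 < g b2 w) -> lF b1 b2 t < lF b1 b2 s.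
Proof.
  intros Hs Hst Ht H.
  enough (- lF b1 b2 s < - lF b1 b2 t) by lra. rewrite !lF_smooth by lra.
  apply (lt_of_deriv_pos_but (fun u => - l_smooth b1 b2 u) (fun u => - (b1 - g b2 u)) e);
    [exact Hst | |].
  - intros w Hw. apply derivable_pt_lim_opp, derive_l. lra.
  - intros w Hw Hne. specialize (H w Hw Hne). lra.
Qed.

Lemma lF_incr_on b1 b2 x y e : 0 <= x -> y < 1 ->
  (forall w, x < w < y -> w <> e -> g b2 w < b1) -> incr_on (fun s => x <= s <= y) (lF b1 b2).
Proof.
  intros Hx Hy H s t Hs Ht Hst. destruct (Req_dec s 0) as [->|Hs0].
  - destruct (lF_rises_from0 b1 b2) as [d [Hd Hn]].
    set (v := Rmin d (t / 2)).
    assert (0 < v <= d) by (split; [apply Rmin_glb_lt; lra | apply Rmin_l]).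
    assert (v <= t / 2) by apply Rmin_r.
    apply Rlt_trans with (lF b1 b2 v); [apply Hn; auto|].
    apply (lF_lt_inside _ _ _ _ e); try lra. intros w Hw Hne. apply H; auto; lra.
  - apply (lF_lt_inside _ _ _ _ e); try lra. intros w Hw Hne. apply H; auto; lra.
Qed.

Lemma lF_decr_on b1 b2 x y e : 0 < x -> y <= 1 ->
  (forall w, x < w < y -> w <> e -> b1 < g b2 w) -> decr_on (fun s => x <= s <= y) (lF b1 b2).
Proof.
  intros Hx Hy H s t Hs Ht Hst. destruct (Req_dec t 1) as [->|Ht1].
  - destruct (lF_falls_to1 b1 b2) as [d [Hd Hn]].
    set (v := Rmax (1 - d) ((1 + s) / 2)).
    assert (1 - d <= v < 1) by (split; [apply Rmax_l | apply Rmax_lub_lt; lra]).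
    assert ((1 + s) / 2 <= v) by apply Rmax_r.
    apply Rlt_trans with (lF b1 b2 v); [apply Hn; auto|].
    apply (lF_gt_inside _ _ _ _ e); try lra. intros w Hw Hne. apply H; auto; lra.
  - apply (lF_gt_inside _ _ _ _ e); try lra. intros w Hw Hne. apply H; auto; lra.
Qed.

Lemma lF_bounded b1 b2 v : 0 <= v <= 1 -> lF b1 b2 v <= Rabs b1 + Rabs b2 + Rabs b3 + 1.
Proof.
  intros Hv. unfold lF, lfun.
  pose proof (xlnx_lb v Hv). pose proof (xlnx_lb (1 - v) ltac:(lra)).
  pose proof (monomial_bound b1 v 1 Hv). simpl pow in H1. rewrite Rmult_1_r in H1.
  pose proof (monomial_bound b2 v (S (S a)) Hv).
  pose proof (monomial_bound b3 v (S (S (S (c + a)))) Hv). lra.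
Qed.

Lemma lF_shift b1 b2 b1' b2' v :
  lF b1' b2' v = lF b1 b2 v + (b1' - b1) * v + (b2' - b2) * v ^ S (S a).
Proof. unfold lF, lfun. ring. Qed.

Lemma global_max_shift b1 b2 b1' b2' w1 w2 :
  b1 <= b1' -> b2 <= b2' -> 0 < (b1' - b1) + (b2' - b2) -> 0 <= w1 < w2 -> w2 <= 1 ->
  is_global_max01 (lF b1 b2) w2 -> ~ is_global_max01 (lF b1' b2') w1.
Proof.
  intros H1 H2 H3 Hw Hw2 [_ G2] [_ G1].
  pose proof (G2 w1 ltac:(lra)). pose proof (G1 w2 ltac:(lra)).
  rewrite !(lF_shift b1 b2 b1' b2') in H0.
  pose proof (pow_lt_S w1 w2 (S a) ltac:(lra) ltac:(lra)).
  assert (0 <= (b1' - b1) * (w2 - w1)) by (apply Rmult_le_pos; lra).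
  assert (0 <= (b2' - b2) * (w2 ^ S (S a) - w1 ^ S (S a))) by (apply Rmult_le_pos; lra).
  destruct (Rlt_or_le 0 (b1' - b1)) as [E|E].
  - assert (0 < (b1' - b1) * (w2 - w1)) by (apply Rmult_lt_0_compat; lra). lra.
  - assert (0 < (b2' - b2) * (w2 ^ S (S a) - w1 ^ S (S a))) by (apply Rmult_lt_0_compat; lra).
    lra.
Qed.

Section Corner.

Variable u0 : R.
Hypothesis Hu0 : 0 < u0 < 1.
Hypothesis Hk : kappa u0 = b3.

Lemma dbeta_neg u : 0 < u < u0 -> dbeta u < 0.
Proof.
  intros Hu. unfold dbeta. pose proof (dbeta_factor_pos u ltac:(lra)).
  assert (kappa u < b3) by (rewrite <- Hk; apply kappa_incr; lra). nra.
Qed.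

Lemma dbeta_pos u : u0 < u < 1 -> 0 < dbeta u.
Proof.
  intros Hu. unfold dbeta. pose proof (dbeta_factor_pos u ltac:(lra)).
  assert (b3 < kappa u) by (rewrite <- Hk; apply kappa_incr; lra). nra.
Qed.

Lemma beta_decr : decr_on (fun s => 0 < s <= u0) beta.
Proof.
  apply (decr_on_deriv _ beta dbeta u0); [intros; lra | intros; apply derive_beta; lra |].
  intros s t w Hs Ht Hw _. apply dbeta_neg. lra.
Qed.

Lemma beta_incr : incr_on (fun s => u0 <= s < 1) beta.
Proof.
  apply (incr_on_deriv _ beta dbeta u0); [intros; lra | intros; apply derive_beta; lra |].
  intros s t w Hs Ht Hw _. apply dbeta_pos. lra.
Qed.

(* Since B1' = - p u^(p-1) beta', B1 increases where beta decreases. *)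
Lemma B1_incr : incr_on (fun s => 0 < s <= u0) B1.
Proof.
  apply (incr_on_deriv _ B1 (fun u => - pR * u ^ S a * dbeta u) u0);
    [intros; lra | intros; apply derive_B1; lra |].
  intros s t w Hs Ht Hw _. pose proof (dbeta_neg w ltac:(lra)). pose proof pR_ge2.
  assert (0 < pR * w ^ S a) by (apply Rmult_lt_0_compat; [lra | apply pow_lt; lra]). nra.
Qed.

Lemma B1_decr : decr_on (fun s => u0 <= s < 1) B1.
Proof.
  apply (decr_on_deriv _ B1 (fun u => - pR * u ^ S a * dbeta u) u0);
    [intros; lra | intros; apply derive_B1; lra |].
  intros s t w Hs Ht Hw _. pose proof (dbeta_pos w ltac:(lra)). pose proof pR_ge2.
  assert (0 < pR * w ^ S a) by (apply Rmult_lt_0_compat; [lra | apply pow_lt; lra]). nra.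
Qed.

Lemma beta_min w : 0 < w < 1 -> w <> u0 -> beta u0 < beta w.
Proof.
  intros Hw Hne. destruct (Rtotal_order w u0) as [E|[E|E]]; [| contradiction |].
  - apply beta_decr; lra.
  - apply beta_incr; lra.
Qed.

Definition level_pts b2 al ga := 0 < al < u0 /\ u0 < ga < 1 /\ beta al = b2 /\ beta ga = b2.

Lemma level_pts_exist b2 : beta u0 < b2 -> exists al ga, level_pts b2 al ga.
Proof.
  intros Hb. destruct (beta_large b2) as [m [Hm Hbig]].
  set (s := Rmin m (u0 / 2)). set (t := Rmax (1 - m) ((1 + u0) / 2)).
  assert (s <= m /\ s <= u0 / 2) by (split; [apply Rmin_l | apply Rmin_r]).
  assert (0 < s) by (apply Rmin_glb_lt; lra).
  assert (1 - m <= t /\ (1 + u0) / 2 <= t) by (split; [apply Rmax_l | apply Rmax_r]).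
  assert (t < 1) by (apply Rmax_lub_lt; lra).
  destruct (ivt_down beta s u0 b2) as [al [Hal Hbal]]; try lra.
  { intros w Hw. apply beta_continuous. lra. }
  { apply Hbig; nra. }
  destruct (ivt_up beta u0 t b2) as [ga [Hga Hbga]]; try lra.
  { intros w Hw. apply beta_continuous. lra. }
  { apply Hbig; nra. }
  exists al, ga. repeat split; lra.
Qed.

Section Profile.

Variables (b2 al ga : R).
Hypothesis Hlev : level_pts b2 al ga.

Lemma g_incr_left : incr_on (fun s => 0 < s <= al) (g b2).
Proof.
  destruct Hlev as [Ha [Hg [Hba Hbg]]].
  apply (incr_on_deriv _ (g b2) (dg b2) al); [intros; lra | intros; apply derive_g; lra |].
  intros s t w Hs Ht Hw Hne. pose proof pR_ge2.
  assert (b2 < beta w) by (rewrite <- Hba; apply beta_decr; lra).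
  assert (0 < pR * (pR - 1) * w ^ a) by positivity. unfold dg. nra.
Qed.

Lemma g_decr_mid : decr_on (fun s => al <= s <= ga) (g b2).
Proof.
  destruct Hlev as [Ha [Hg [Hba Hbg]]].
  apply (decr_on_deriv _ (g b2) (dg b2) u0); [intros; lra | intros; apply derive_g; lra |].
  intros s t w Hs Ht Hw Hne. pose proof pR_ge2.
  assert (beta w < b2).
  { destruct (Rle_or_lt w u0).
    - rewrite <- Hba. apply beta_decr; lra.
    - rewrite <- Hbg. apply beta_incr; lra. }
  assert (0 < pR * (pR - 1) * w ^ a) by positivity. unfold dg. nra.
Qed.

Lemma g_incr_right : incr_on (fun s => ga <= s < 1) (g b2).
Proof.
  destruct Hlev as [Ha [Hg [Hba Hbg]]].
  apply (incr_on_deriv _ (g b2) (dg b2) ga); [intros; lra | intros; apply derive_g; lra |].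
  intros s t w Hs Ht Hw Hne. pose proof pR_ge2.
  assert (b2 < beta w) by (rewrite <- Hbg; apply beta_incr; lra).
  assert (0 < pR * (pR - 1) * w ^ a) by positivity. unfold dg. nra.
Qed.

Lemma g_turning_values : g b2 al = B1 al /\ g b2 ga = B1 ga.
Proof. destruct Hlev as [_ [_ [Hba Hbg]]]. unfold B1. rewrite Hba, Hbg. auto. Qed.

Lemma B1_ga_lt_al : B1 ga < B1 al.
Proof.
  pose proof Hlev as [Ha [Hg _]]. destruct g_turning_values as [<- <-].
  apply g_decr_mid; lra.
Qed.

End Profile.

(** Below the corner (b2 <= b2c) g is increasing and l has
    one hump; above it, the position of b1 relative to the turning values
    B1(ga) < B1(al) of g decides between one hump and two humps. *)

Lemma shape_below_corner b1 b2 : b2 <= beta u0 -> exists u, one_hump (lF b1 b2) u.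
Proof.
  intros Hb.
  assert (g_incr : incr_on (fun s => 0 < s < 1) (g b2)).
  { apply (incr_on_deriv _ (g b2) (dg b2) u0); [intros; lra | intros; apply derive_g; lra |].
    intros s t w Hs Ht Hw Hne. pose proof (beta_min w ltac:(lra) Hne). pose proof pR_ge2.
    assert (0 < pR * (pR - 1) * w ^ a) by positivity. unfold dg. nra. }
  destruct (g_below_left b2 b1 (1/2)) as [s [Hs1 [Hs2 Hs3]]]; [lra|].
  destruct (g_above_right b2 b1 (1/2)) as [t [Ht1 [Ht2 Ht3]]]; [lra|].
  destruct (ivt_up (g b2) s t b1) as [u [Hu Hgu]]; try lra.
  { intros w Hw. apply g_continuous. lra. }
  exists u. split; [lra | split].
  - apply (lF_incr_on _ _ _ _ 0); try lra. intros w Hw _. rewrite <- Hgu. apply g_incr; lra.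
  - apply (lF_decr_on _ _ _ _ 0); try lra. intros w Hw _. rewrite <- Hgu. apply g_incr; lra.
Qed.

Section Shapes.

Variables (b1 b2 al ga : R).
Hypothesis Hlev : level_pts b2 al ga.

Lemma g_lt_turn_left w : 0 < w < ga -> w <> al -> g b2 w < B1 al.
Proof.
  intros Hw Hne. pose proof Hlev as [Ha [Hg _]]. destruct (g_turning_values _ _ _ Hlev) as [<- _].
  destruct (Rtotal_order w al) as [E|[E|E]]; [| contradiction |].
  - apply (g_incr_left _ _ _ Hlev); lra.
  - apply (g_decr_mid _ _ _ Hlev); lra.
Qed.

Lemma g_gt_turn_right w : al < w < 1 -> w <> ga -> B1 ga < g b2 w.
Proof.
  intros Hw Hne. pose proof Hlev as [Ha [Hg _]]. destruct (g_turning_values _ _ _ Hlev) as [_ <-].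
  destruct (Rtotal_order w ga) as [E|[E|E]]; [| contradiction |].
  - apply (g_decr_mid _ _ _ Hlev); lra.
  - apply (g_incr_right _ _ _ Hlev); lra.
Qed.

Lemma shape_right_hump : B1 al <= b1 -> exists u, ga < u < 1 /\ one_hump (lF b1 b2) u.
Proof.
  intros Hb. pose proof Hlev as [Ha [Hg _]]. pose proof (B1_ga_lt_al _ _ _ Hlev).
  destruct (g_above_right b2 b1 ga) as [t [Ht1 [Ht2 Ht3]]]; [lra|].
  destruct (ivt_up (g b2) ga t b1) as [u [Hu Hgu]]; try lra.
  { intros w Hw. apply g_continuous. lra. }
  { destruct (g_turning_values _ _ _ Hlev) as [_ ->]. lra. }
  exists u. split; [lra | split; [lra | split]].
  - apply (lF_incr_on _ _ _ _ al); try lra. intros w Hw Hne.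
    destruct (Rlt_or_le w ga).
    + pose proof (g_lt_turn_left w ltac:(lra) Hne). lra.
    + destruct (Req_dec w ga) as [->|Hwg].
      * destruct (g_turning_values _ _ _ Hlev) as [_ ->]. lra.
      * rewrite <- Hgu. apply (g_incr_right _ _ _ Hlev); lra.
  - apply (lF_decr_on _ _ _ _ 0); try lra. intros w Hw _. rewrite <- Hgu.
    apply (g_incr_right _ _ _ Hlev); lra.
Qed.

Lemma shape_left_hump : b1 <= B1 ga -> exists u, 0 < u < al /\ one_hump (lF b1 b2) u.
Proof.
  intros Hb. pose proof Hlev as [Ha [Hg _]]. pose proof (B1_ga_lt_al _ _ _ Hlev).
  destruct (g_below_left b2 b1 al) as [s [Hs1 [Hs2 Hs3]]]; [lra|].
  destruct (ivt_up (g b2) s al b1) as [u [Hu Hgu]]; try lra.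
  { intros w Hw. apply g_continuous. lra. }
  { destruct (g_turning_values _ _ _ Hlev) as [-> _]. lra. }
  exists u. split; [lra | split; [lra | split]].
  - apply (lF_incr_on _ _ _ _ 0); try lra. intros w Hw _. rewrite <- Hgu.
    apply (g_incr_left _ _ _ Hlev); lra.
  - apply (lF_decr_on _ _ _ _ ga); try lra. intros w Hw Hne.
    destruct (Rlt_or_le al w).
    + pose proof (g_gt_turn_right w ltac:(lra) Hne). lra.
    + destruct (Req_dec w al) as [->|Hwa].
      * destruct (g_turning_values _ _ _ Hlev) as [-> _]. lra.
      * rewrite <- Hgu. apply (g_incr_left _ _ _ Hlev); lra.
Qed.

Lemma shape_two_humps : B1 ga < b1 < B1 al ->
  exists u1 m u2, u1 < al /\ ga < u2 /\ two_humps (lF b1 b2) u1 m u2.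
Proof.
  intros Hb. pose proof Hlev as [Ha [Hg _]].
  destruct (g_turning_values _ _ _ Hlev) as [Eal Ega].
  destruct (g_below_left b2 b1 al) as [s [Hs1 [Hs2 Hs3]]]; [lra|].
  destruct (g_above_right b2 b1 ga) as [t [Ht1 [Ht2 Ht3]]]; [lra|].
  assert (Hc : forall x y, 0 < x -> y < 1 -> forall w, x <= w <= y -> continuity_pt (g b2) w)
    by (intros; apply g_continuous; lra).
  destruct (ivt_up (g b2) s al b1) as [u1 [Hu1 Hg1]]; [lra | apply Hc; lra | lra | lra |].
  destruct (ivt_down (g b2) al ga b1) as [m [Hm Hgm]]; [lra | apply Hc; lra | lra | lra |].
  destruct (ivt_up (g b2) ga t b1) as [u2 [Hu2 Hg2]]; [lra | apply Hc; lra | lra | lra |].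
  (* the three zeros u1 < m < u2 of l' = b1 - g split [0,1] into four monotone pieces *)
  assert (Hlow : forall w, 0 < w < 1 -> w < u1 \/ m < w < u2 -> g b2 w < b1).
  { intros w Hw [Hw'|Hw'].
    - rewrite <- Hg1. apply (g_incr_left _ _ _ Hlev); lra.
    - destruct (Rle_or_lt w ga).
      + rewrite <- Hgm. apply (g_decr_mid _ _ _ Hlev); lra.
      + rewrite <- Hg2. apply (g_incr_right _ _ _ Hlev); lra. }
  assert (Hhigh : forall w, 0 < w < 1 -> u1 < w < m \/ u2 < w -> b1 < g b2 w).
  { intros w Hw [Hw'|Hw'].
    - destruct (Rle_or_lt w al).
      + rewrite <- Hg1. apply (g_incr_left _ _ _ Hlev); lra.
      + rewrite <- Hgm. apply (g_decr_mid _ _ _ Hlev); lra.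
    - rewrite <- Hg2. apply (g_incr_right _ _ _ Hlev); lra. }
  exists u1, m, u2. split; [lra | split; [lra|]].
  split; [lra | split; [lra | split; [| split; [| split]]]].
  - apply (lF_incr_on _ _ _ _ 0); try lra. intros w Hw _. apply Hlow; lra.
  - apply (lF_decr_on _ _ _ _ 0); try lra. intros w Hw _. apply Hhigh; lra.
  - apply (lF_incr_on _ _ _ _ 0); try lra. intros w Hw _. apply Hlow; lra.
  - apply (lF_decr_on _ _ _ _ 0); try lra. intros w Hw _. apply Hhigh; lra.
Qed.

End Shapes.

(** B1 is increasing on (0,u0] and decreasing
    on [u0,1) with maximum b1c = B1(u0); its two inverse branches, composed
    with beta, give the upper and lower boundaries U and L. *)

Definition B1_inv_left x := epsilon (inhabits 0) (fun s => 0 < s < u0 /\ B1 s = x).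
Definition B1_inv_right x := epsilon (inhabits 0) (fun s => u0 < s < 1 /\ B1 s = x).
Definition Ubd x := beta (B1_inv_left x).
Definition Lbd x := beta (B1_inv_right x).

(* Both branches are defined below the maximum B1(u0), thanks to B1 -> -oo at 0 and 1. *)
Lemma B1_inv_left_spec x : x < B1 u0 -> 0 < B1_inv_left x < u0 /\ B1 (B1_inv_left x) = x.
Proof.
  intros Hx. unfold B1_inv_left. apply epsilon_spec.
  destruct (B1_below_near0 x) as [d [Hd Hl]].
  set (s := Rmin d (u0 / 2)).
  assert (0 < s <= d) by (split; [apply Rmin_glb_lt; lra | apply Rmin_l]).
  assert (s <= u0 / 2) by apply Rmin_r.
  destruct (ivt_up B1 s u0 x) as [z [Hz1 Hz2]]; try lra.
  - intros w Hw. apply B1_continuous. lra.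
  - apply Hl. lra.
  - exists z. split; [lra | auto].
Qed.

Lemma B1_inv_right_spec x : x < B1 u0 -> u0 < B1_inv_right x < 1 /\ B1 (B1_inv_right x) = x.
Proof.
  intros Hx. unfold B1_inv_right. apply epsilon_spec.
  destruct (B1_below_near1 x) as [d [Hd Hl]].
  set (t := Rmax (1 - d) ((1 + u0) / 2)).
  assert (1 - d <= t < 1) by (split; [apply Rmax_l | apply Rmax_lub_lt; lra]).
  assert ((1 + u0) / 2 <= t) by apply Rmax_r.
  destruct (ivt_down B1 u0 t x) as [z [Hz1 Hz2]]; try lra.
  - intros w Hw. apply B1_continuous. lra.
  - apply Hl. lra.
  - exists z. split; [lra | auto].
Qed.

Lemma B1_inv_left_B1 w : 0 < w < u0 -> B1_inv_left (B1 w) = w.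
Proof.
  intros Hw. assert (B1 w < B1 u0) by (apply B1_incr; lra).
  destruct (B1_inv_left_spec (B1 w) H) as [Hs HB].
  apply (incr_on_inj _ B1 _ _ B1_incr); auto; lra.
Qed.

Lemma B1_inv_right_B1 w : u0 < w < 1 -> B1_inv_right (B1 w) = w.
Proof.
  intros Hw. assert (B1 w < B1 u0) by (apply B1_decr; lra).
  destruct (B1_inv_right_spec (B1 w) H) as [Hs HB].
  apply (decr_on_inj _ B1 _ _ B1_decr); auto; lra.
Qed.

(* L and U are continuous (inverse of a monotone continuous map, then beta) ... *)
Lemma bounds_continuous x : x < B1 u0 -> continuity_pt Lbd x /\ continuity_pt Ubd x.
Proof.
  intros Hx. destruct (B1_inv_left_spec x Hx) as [Hs Es].
  destruct (B1_inv_right_spec x Hx) as [Ht Et].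
  split.
  - apply (continuity_pt_comp B1_inv_right beta); [| apply beta_continuous; lra].
    set (t := B1_inv_right x) in *.
    apply (inverse_continuous_decr B1 _ ((u0 + t) / 2) ((t + 1) / 2)); [lra | | | |].
    + intros y z Hy Hz Hyz. apply B1_decr; lra.
    + intros w Hw. apply B1_continuous. lra.
    + intros w Hw. apply B1_inv_right_B1. lra.
    + rewrite <- Et. split; apply B1_decr; lra.
  - apply (continuity_pt_comp B1_inv_left beta); [| apply beta_continuous; lra].
    set (s := B1_inv_left x) in *.
    apply (inverse_continuous_incr B1 _ (s / 2) ((s + u0) / 2)); [lra | | | |].
    + intros y z Hy Hz Hyz. apply B1_incr; lra.
    + intros w Hw. apply B1_continuous. lra.
    + intros w Hw. apply B1_inv_left_B1. lra.
    + rewrite <- Es. split; apply B1_incr; lra.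
Qed.

(* ... and decreasing: B1 and beta are monotone in opposite directions on each side. *)
Lemma bounds_decreasing x y : x < y -> y < B1 u0 -> Lbd y < Lbd x /\ Ubd y < Ubd x.
Proof.
  intros Hxy Hy.
  destruct (B1_inv_left_spec x ltac:(lra)) as [Ax Bx].
  destruct (B1_inv_left_spec y ltac:(lra)) as [Ay By].
  destruct (B1_inv_right_spec x ltac:(lra)) as [Cx Dx].
  destruct (B1_inv_right_spec y ltac:(lra)) as [Cy Dy].
  unfold Lbd, Ubd. split.
  - apply beta_incr; try lra. apply (decr_on_rev _ B1 _ _ B1_decr); lra.
  - apply beta_decr; try lra. apply (incr_on_rev _ B1 _ _ B1_incr); lra.
Qed.

Lemma in_V_iff b1 b2 al ga : level_pts b2 al ga ->
  (b1 < B1 u0 /\ Lbd b1 < b2 < Ubd b1 <-> B1 ga < b1 < B1 al).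
Proof.
  intros Hlev. pose proof Hlev as [Ha [Hg [Hba Hbg]]]. unfold Lbd, Ubd. split.
  - intros [Hb [HL HU]].
    destruct (B1_inv_left_spec b1 Hb) as [As Bs].
    destruct (B1_inv_right_spec b1 Hb) as [Ct Dt].
    assert (B1_inv_left b1 < al) by (apply (decr_on_rev _ beta _ _ beta_decr); lra).
    assert (B1_inv_right b1 < ga) by (apply (incr_on_rev _ beta _ _ beta_incr); lra).
    rewrite <- Bs at 2. rewrite <- Dt at 1. split; [apply B1_decr | apply B1_incr]; lra.
  - intros [H1 H2].
    assert (B1 al < B1 u0) by (apply B1_incr; lra).
    assert (Hb : b1 < B1 u0) by lra.
    destruct (B1_inv_left_spec b1 Hb) as [As Bs].
    destruct (B1_inv_right_spec b1 Hb) as [Ct Dt].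
    assert (B1_inv_left b1 < al) by (apply (incr_on_rev _ B1 _ _ B1_incr); lra).
    assert (B1_inv_right b1 < ga) by (apply (decr_on_rev _ B1 _ _ B1_decr); lra).
    split; [exact Hb | split].
    + rewrite <- Hbg. apply beta_incr; lra.
    + rewrite <- Hba. apply beta_decr; lra.
Qed.

Lemma level_pts_Ubd x : x < B1 u0 ->
  exists ga, level_pts (Ubd x) (B1_inv_left x) ga.
Proof.
  intros Hx. destruct (B1_inv_left_spec x Hx) as [As Bs].
  assert (Hb : beta u0 < Ubd x) by (apply beta_decr; lra).
  destruct (level_pts_exist _ Hb) as [al [ga Hlev]].
  pose proof Hlev as [Ha [Hg [Hba Hbg]]].
  unfold Ubd in Hba.
  assert (al = B1_inv_left x) by (apply (decr_on_inj _ beta _ _ beta_decr); lra).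
  subst al. exists ga. exact Hlev.
Qed.

Lemma level_pts_Lbd x : x < B1 u0 ->
  exists al, level_pts (Lbd x) al (B1_inv_right x).
Proof.
  intros Hx. destruct (B1_inv_right_spec x Hx) as [Ct Dt].
  assert (Hb : beta u0 < Lbd x) by (apply beta_incr; lra).
  destruct (level_pts_exist _ Hb) as [al [ga Hlev]].
  pose proof Hlev as [Ha [Hg [Hba Hbg]]].
  unfold Lbd in Hbg.
  assert (ga = B1_inv_right x) by (apply (incr_on_inj _ beta _ _ beta_incr); lra).
  subst ga. exists al. exact Hlev.
Qed.

(* L < U: at the level U(x) the right turning value B1(ga) is below x = B1(al). *)
Lemma Lbd_lt_Ubd x : x < B1 u0 -> Lbd x < Ubd x.
Proof.
  intros Hx. destruct (level_pts_Ubd x Hx) as [ga Hlev].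
  pose proof Hlev as [Ha [Hg [Hba Hbg]]].
  destruct (B1_inv_left_spec x Hx) as [As Bs].
  destruct (B1_inv_right_spec x Hx) as [Ct Dt].
  pose proof (B1_ga_lt_al _ _ _ Hlev) as Hlt. rewrite Bs in Hlt.
  assert (B1_inv_right x < ga) by (apply (decr_on_rev _ B1 _ _ B1_decr); lra).
  unfold Lbd. rewrite <- Hbg. apply beta_incr; lra.
Qed.

Lemma Lbd_gt_corner x : x < B1 u0 -> beta u0 < Lbd x.
Proof. intros Hx. destruct (B1_inv_right_spec x Hx). apply beta_incr; lra. Qed.

Lemma bounds_at_corner eps : 0 < eps -> exists d, 0 < d /\
  forall x, B1 u0 - d < x < B1 u0 ->
  Rabs (Lbd x - beta u0) < eps /\ Rabs (Ubd x - beta u0) < eps.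
Proof.
  intros He. pose proof (beta_continuous u0 Hu0) as Hc.
  destruct (Hc eps He) as [d1 [Hd1 Hbeta]].
  set (s := Rmax (u0 - d1 / 2) (u0 / 2)). set (t := Rmin (u0 + d1 / 2) ((1 + u0) / 2)).
  assert (u0 - d1 / 2 <= s /\ u0 / 2 <= s) by (split; [apply Rmax_l | apply Rmax_r]).
  assert (s < u0) by (apply Rmax_lub_lt; lra).
  assert (t <= u0 + d1 / 2 /\ t <= (1 + u0) / 2) by (split; [apply Rmin_l | apply Rmin_r]).
  assert (u0 < t) by (apply Rmin_glb_lt; lra).
  assert (Bs : B1 s < B1 u0) by (apply B1_incr; lra).
  assert (Bt : B1 t < B1 u0) by (apply B1_decr; lra).
  assert (Hnear : forall w, 0 < w < 1 -> Rabs (w - u0) < d1 -> Rabs (beta w - beta u0) < eps).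
  { intros w Hw Hwd. destruct (Req_dec w u0) as [->|Hne].
    - rewrite Rminus_diag, Rabs_R0. exact He.
    - apply Hbeta. split; [split; [exact I | auto] | exact Hwd]. }
  exists (Rmin (B1 u0 - B1 s) (B1 u0 - B1 t)). split; [apply Rmin_glb_lt; lra|].
  intros x [Hx1 Hx2].
  assert (B1 s < x /\ B1 t < x)
    by (split; [pose proof (Rmin_l (B1 u0 - B1 s) (B1 u0 - B1 t)) |
                pose proof (Rmin_r (B1 u0 - B1 s) (B1 u0 - B1 t))]; lra).
  destruct (B1_inv_left_spec x Hx2) as [As Bs'].
  destruct (B1_inv_right_spec x Hx2) as [Ct Dt].
  assert (s < B1_inv_left x) by (apply (incr_on_rev _ B1 _ _ B1_incr); lra).
  assert (B1_inv_right x < t) by (apply (decr_on_rev _ B1 _ _ B1_decr); lra).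
  unfold Lbd, Ubd. split; apply Hnear; try lra; apply Rabs_def1; lra.
Qed.

Lemma bounds_at_minus_infinity M : exists N, forall x, x < N -> x < B1 u0 ->
  M < Lbd x /\ M < Ubd x.
Proof.
  destruct (beta_large M) as [m [Hm Hbig]].
  set (s := Rmin m (u0 / 2)). set (t := Rmax (1 - m) ((1 + u0) / 2)).
  assert (s <= m /\ s <= u0 / 2) by (split; [apply Rmin_l | apply Rmin_r]).
  assert (0 < s) by (apply Rmin_glb_lt; lra).
  assert (1 - m <= t /\ (1 + u0) / 2 <= t) by (split; [apply Rmax_l | apply Rmax_r]).
  assert (t < 1) by (apply Rmax_lub_lt; lra).
  exists (Rmin (B1 s) (B1 t)). intros x Hx Hx2.
  assert (x < B1 s /\ x < B1 t)
    by (split; [pose proof (Rmin_l (B1 s) (B1 t)) | pose proof (Rmin_r (B1 s) (B1 t))]; lra).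
  destruct (B1_inv_left_spec x Hx2) as [As Bs'].
  destruct (B1_inv_right_spec x Hx2) as [Ct Dt].
  assert (B1_inv_left x < s) by (apply (incr_on_rev _ B1 _ _ B1_incr); lra).
  assert (t < B1_inv_right x) by (apply (decr_on_rev _ B1 _ _ B1_decr); lra).
  assert (M < beta s /\ M < beta t) by (split; apply Hbig; nra).
  unfold Lbd, Ubd. split.
  - pose proof (beta_incr t (B1_inv_right x)). lra.
  - pose proof (beta_decr (B1_inv_left x) s). lra.
Qed.

Lemma outside_V b1 b2 : ~ (b1 < B1 u0 /\ Lbd b1 < b2 < Ubd b1) ->
  exists u, is_local_max01 (lF b1 b2) u /\ is_global_max01 (lF b1 b2) u /\
            forall v, is_local_max01 (lF b1 b2) v -> v = u.
Proof.
  intros HV. destruct (Rle_or_lt b2 (beta u0)) as [Hb|Hb].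
  - destruct (shape_below_corner b1 b2 Hb) as [u Hu]. exists u. apply one_hump_max, Hu.
  - destruct (level_pts_exist b2 Hb) as [al [ga Hlev]].
    destruct (Rle_or_lt b1 (B1 ga)) as [E|E]; [|destruct (Rlt_or_le b1 (B1 al)) as [E'|E']].
    + destruct (shape_left_hump b1 b2 al ga Hlev E) as [u [_ Hu]].
      exists u. apply one_hump_max, Hu.
    + exfalso. apply HV, (in_V_iff b1 b2 al ga Hlev). auto.
    + destruct (shape_right_hump b1 b2 al ga Hlev E') as [u [_ Hu]].
      exists u. apply one_hump_max, Hu.
Qed.

Lemma inside_V b1 b2 : b1 < B1 u0 -> Lbd b1 < b2 < Ubd b1 ->
  exists u1 m u2, u1 < u0 < u2 /\ two_humps (lF b1 b2) u1 m u2.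
Proof.
  intros Hb1 Hb2. pose proof (Lbd_gt_corner b1 Hb1).
  destruct (level_pts_exist b2 ltac:(lra)) as [al [ga Hlev]].
  pose proof Hlev as [Ha [Hg _]].
  destruct (shape_two_humps b1 b2 al ga Hlev) as [u1 [m [u2 [H1 [H2 HB]]]]].
  - apply (in_V_iff b1 b2 al ga Hlev). auto.
  - exists u1, m, u2. split; [lra | exact HB].
Qed.

(** Compare the heights of l on [0,u0] and [u0,1]:
    their difference is continuous in b2, positive on the upper boundary and
    negative on the lower one; at a zero the two humps have equal height. *)

Definition sup_gap b1 b2 := sup_on (lF b1 b2) u0 1 - sup_on (lF b1 b2) 0 u0.

Lemma lF_le_sup b1 b2 lo hi v : 0 <= lo -> lo <= hi -> hi <= 1 -> lo <= v <= hi ->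
  lF b1 b2 v <= sup_on (lF b1 b2) lo hi.
Proof.
  intros. apply (sup_on_ge _ _ _ (Rabs b1 + Rabs b2 + Rabs b3 + 1)); auto.
  intros; apply lF_bounded; lra.
Qed.

(* The suprema are 1-Lipschitz in b2, since |u^p| <= 1 on [0,1]. *)
Lemma sup_lipschitz b1 b2 b2' lo hi : 0 <= lo -> lo <= hi -> hi <= 1 ->
  sup_on (lF b1 b2') lo hi <= sup_on (lF b1 b2) lo hi + Rabs (b2' - b2).
Proof.
  intros H0 H1 H2. apply sup_on_le; auto. intros v Hv.
  rewrite (lF_shift b1 b2 b1 b2' v).
  pose proof (lF_le_sup b1 b2 lo hi v H0 H1 H2 Hv).
  pose proof (monomial_bound (b2' - b2) v (S (S a)) ltac:(lra)). lra.
Qed.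

Lemma sup_gap_continuous b1 b2 : continuity_pt (sup_gap b1) b2.
Proof.
  intros eps He. exists (eps / 2). split; [lra|]. intros y [_ Hy]. simpl in *. unfold R_dist in *.
  unfold sup_gap.
  pose proof (sup_lipschitz b1 b2 y u0 1 ltac:(lra) ltac:(lra) ltac:(lra)).
  pose proof (sup_lipschitz b1 y b2 u0 1 ltac:(lra) ltac:(lra) ltac:(lra)).
  pose proof (sup_lipschitz b1 b2 y 0 u0 ltac:(lra) ltac:(lra) ltac:(lra)).
  pose proof (sup_lipschitz b1 y b2 0 u0 ltac:(lra) ltac:(lra) ltac:(lra)).
  rewrite Rabs_minus_sym in H0, H2. apply Rabs_def1; lra.
Qed.

(* On the upper boundary l has a single hump, to the right of u0. *)
Lemma sup_gap_at_Ubd b1 : b1 < B1 u0 -> 0 < sup_gap b1 (Ubd b1).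
Proof.
  intros Hb. destruct (level_pts_Ubd b1 Hb) as [ga Hlev].
  destruct (B1_inv_left_spec b1 Hb) as [_ Bs].
  destruct (shape_right_hump b1 _ _ ga Hlev ltac:(lra)) as [u [Hu [Hu1 [Hi Hd]]]].
  pose proof Hlev as [_ [Hg _]]. unfold sup_gap.
  assert (lF b1 (Ubd b1) u <= sup_on (lF b1 (Ubd b1)) u0 1) by (apply lF_le_sup; lra).
  assert (sup_on (lF b1 (Ubd b1)) 0 u0 <= lF b1 (Ubd b1) u0).
  { apply sup_on_le; [lra|]. intros v Hv. apply (incr_on_le _ _ v u0 Hi); lra. }
  assert (lF b1 (Ubd b1) u0 < lF b1 (Ubd b1) u) by (apply Hi; lra).
  lra.
Qed.

(* On the lower boundary l has a single hump, to the left of u0. *)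
Lemma sup_gap_at_Lbd b1 : b1 < B1 u0 -> sup_gap b1 (Lbd b1) < 0.
Proof.
  intros Hb. destruct (level_pts_Lbd b1 Hb) as [al Hlev].
  destruct (B1_inv_right_spec b1 Hb) as [_ Dt].
  destruct (shape_left_hump b1 _ al _ Hlev ltac:(lra)) as [u [Hu [Hu1 [Hi Hd]]]].
  pose proof Hlev as [Ha _]. unfold sup_gap.
  assert (lF b1 (Lbd b1) u <= sup_on (lF b1 (Lbd b1)) 0 u0) by (apply lF_le_sup; lra).
  assert (sup_on (lF b1 (Lbd b1)) u0 1 <= lF b1 (Lbd b1) u0).
  { apply sup_on_le; [lra|]. intros v Hv. apply (decr_on_le _ _ u0 v Hd); lra. }
  assert (lF b1 (Lbd b1) u0 < lF b1 (Lbd b1) u) by (apply Hd; lra).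
  lra.
Qed.

Lemma sup_gap_zero_equal_heights b1 b2 u1 m u2 : u1 < u0 < u2 ->
  two_humps (lF b1 b2) u1 m u2 -> sup_gap b1 b2 = 0 -> lF b1 b2 u1 = lF b1 b2 u2.
Proof.
  intros Hu HB HD. pose proof HB as [H1 [H2 [I1 [D1 [I2 D2]]]]].
  destruct (two_humps_max _ _ _ _ HB) as [_ [_ [_ [F1 F2]]]].
  set (f := lF b1 b2) in *. unfold sup_gap in HD. fold f in HD.
  assert (G1 : f u1 <= sup_on f 0 u0) by (apply lF_le_sup; lra).
  assert (G2 : f u2 <= sup_on f u0 1) by (apply lF_le_sup; lra).
  destruct (Rtotal_order (f u1) (f u2)) as [E|[E|E]]; auto; exfalso.
  - (* then sup on [0,u0] <= max (f u1) (f u0) < f u2 *)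
    assert (f u0 < f u2) by (destruct (Rle_or_lt u0 m); [pose proof (F1 u0 ltac:(lra)); lra |
                                                         apply I2; lra]).
    assert (sup_on f 0 u0 <= Rmax (f u1) (f u0)).
    { apply sup_on_le; [lra|]. intros v Hv. destruct (Rle_or_lt v m).
      - apply Rle_trans with (f u1); [apply F1; lra | apply Rmax_l].
      - apply Rle_trans with (f u0); [apply (incr_on_le _ f v u0 I2); lra | apply Rmax_r]. }
    unfold Rmax in *. destruct (Rle_dec (f u1) (f u0)); lra.
  - (* symmetrically, sup on [u0,1] <= max (f u2) (f u0) < f u1 *)
    assert (f u0 < f u1) by (destruct (Rlt_or_le u0 m); [apply D1; lra |
                                                         pose proof (F2 u0 ltac:(lra)); lra]).
    assert (sup_on f u0 1 <= Rmax (f u2) (f u0)).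
    { apply sup_on_le; [lra|]. intros v Hv. destruct (Rle_or_lt m v).
      - apply Rle_trans with (f u2); [apply F2; lra | apply Rmax_l].
      - apply Rle_trans with (f u0); [apply (decr_on_le _ f u0 v D1); lra | apply Rmax_r]. }
    unfold Rmax in *. destruct (Rle_dec (f u2) (f u0)); lra.
Qed.

Definition all_local_max_global b1 b2 :=
  forall u, is_local_max01 (lF b1 b2) u -> is_global_max01 (lF b1 b2) u.

Lemma equal_humps_global b1 b2 u1 m u2 : two_humps (lF b1 b2) u1 m u2 ->
  lF b1 b2 u1 = lF b1 b2 u2 -> all_local_max_global b1 b2.
Proof.
  intros HB E. pose proof HB as [H1 [H2 _]].
  destruct (two_humps_max _ _ _ _ HB) as [_ [_ [Only [F1 F2]]]].
  assert (G : forall v, 0 <= v <= 1 -> lF b1 b2 v <= lF b1 b2 u1).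
  { intros v Hv. destruct (Rle_or_lt v m); [apply F1; lra | rewrite E; apply F2; lra]. }
  intros u Hu. destruct (Only u Hu) as [->| ->]; split; try lra; intros v Hv.
  - apply G, Hv.
  - rewrite <- E. apply G, Hv.
Qed.

Lemma coexistence_exists b1 : b1 < B1 u0 ->
  exists b2, Lbd b1 < b2 < Ubd b1 /\ all_local_max_global b1 b2.
Proof.
  intros Hb. pose proof (Lbd_lt_Ubd b1 Hb).
  destruct (ivt_up (sup_gap b1) (Lbd b1) (Ubd b1) 0) as [b2 [Hb2 HD]]; auto.
  - intros w _. apply sup_gap_continuous.
  - apply sup_gap_at_Lbd, Hb.
  - apply sup_gap_at_Ubd, Hb.
  - exists b2. split; auto.
    destruct (inside_V b1 b2 Hb Hb2) as [u1 [m [u2 [Hu HB]]]].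
    apply (equal_humps_global b1 b2 u1 m u2 HB).
    apply (sup_gap_zero_equal_heights b1 b2 u1 m u2); auto.
Qed.

Lemma coexisting_maximizers b1 b2 : b1 < B1 u0 -> Lbd b1 < b2 < Ubd b1 ->
  all_local_max_global b1 b2 ->
  exists u1 u2, 0 <= u1 < u0 /\ u0 < u2 <= 1 /\
    is_global_max01 (lF b1 b2) u1 /\ is_global_max01 (lF b1 b2) u2.
Proof.
  intros Hb1 Hb2 HG. destruct (inside_V b1 b2 Hb1 Hb2) as [u1 [m [u2 [Hu HB]]]].
  pose proof HB as [H1 [H2 _]].
  destruct (two_humps_max _ _ _ _ HB) as [L1 [L2 _]].
  exists u1, u2. split; [lra | split; [lra | split; apply HG; auto]].
Qed.

Definition coexistence_line b1 := epsilon (inhabits 0)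
  (fun b2 => Lbd b1 < b2 < Ubd b1 /\ all_local_max_global b1 b2).

Lemma coexistence_line_spec b1 : b1 < B1 u0 ->
  Lbd b1 < coexistence_line b1 < Ubd b1 /\ all_local_max_global b1 (coexistence_line b1).
Proof. intros Hb. unfold coexistence_line. apply epsilon_spec, coexistence_exists, Hb. Qed.

(* At most one b2 per b1 yields coexistence (by [global_max_shift]) ... *)
Lemma coexistence_unique b1 b2 b2' : b1 < B1 u0 ->
  Lbd b1 < b2 < Ubd b1 -> Lbd b1 < b2' < Ubd b1 ->
  all_local_max_global b1 b2 -> all_local_max_global b1 b2' -> b2 = b2'.
Proof.
  intros Hb V1 V2 G1 G2.
  destruct (coexisting_maximizers b1 b2 Hb V1 G1) as [u1 [u2 [Hu1 [Hu2 [A1 A2]]]]].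
  destruct (coexisting_maximizers b1 b2' Hb V2 G2) as [v1 [v2 [Hv1 [Hv2 [B1' B2']]]]].
  destruct (Rtotal_order b2 b2') as [E|[E|E]]; auto; exfalso.
  - apply (global_max_shift b1 b2 b1 b2' v1 u2); auto; lra.
  - apply (global_max_shift b1 b2' b1 b2 u1 v2); auto; lra.
Qed.

(* ... and r is decreasing, for the same reason. *)
Lemma coexistence_decreasing x y : x < y -> y < B1 u0 ->
  coexistence_line y < coexistence_line x.
Proof.
  intros Hxy Hy.
  destruct (coexistence_line_spec x ltac:(lra)) as [Vx Gx].
  destruct (coexistence_line_spec y Hy) as [Vy Gy].
  destruct (coexisting_maximizers x _ ltac:(lra) Vx Gx) as [u1 [u2 [Hu1 [Hu2 [A1 A2]]]]].
  destruct (coexisting_maximizers y _ Hy Vy Gy) as [v1 [v2 [Hv1 [Hv2 [B1' B2']]]]].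
  destruct (Rlt_or_le (coexistence_line y) (coexistence_line x)) as [E|E]; auto; exfalso.
  apply (global_max_shift x (coexistence_line x) y (coexistence_line y) v1 u2); auto; lra.
Qed.

Lemma phase_diagram :
  let L := Lbd in let U := Ubd in let b1c := B1 u0 in let b2c := beta u0 in
    (forall x, x < b1c -> continuity_pt L x /\ continuity_pt U x) /\
    (forall x y, x < y < b1c -> L y < L x /\ U y < U x) /\
    (forall x, x < b1c -> L x < U x) /\
    (forall eps, 0 < eps -> exists d, 0 < d /\ forall x, b1c - d < x < b1c ->
        Rabs (L x - b2c) < eps /\ Rabs (U x - b2c) < eps) /\
    (forall M, exists N, forall x, x < N -> x < b1c -> M < L x /\ M < U x) /\
    (forall b1 b2, ~ (b1 < b1c /\ L b1 < b2 < U b1) ->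
       exists u, is_local_max01 (lF b1 b2) u /\ is_global_max01 (lF b1 b2) u /\
                 forall v, is_local_max01 (lF b1 b2) v -> v = u) /\
    (forall b1 b2, b1 < b1c -> L b1 < b2 < U b1 ->
       exists u1 u2, 0 < u1 < u2 /\ u2 < 1 /\
         is_local_max01 (lF b1 b2) u1 /\ is_local_max01 (lF b1 b2) u2 /\
         forall v, is_local_max01 (lF b1 b2) v -> v = u1 \/ v = u2) /\
    (exists r : R -> R,
       (forall b1, b1 < b1c ->
          L b1 < r b1 < U b1 /\ all_local_max_global b1 (r b1) /\
          (forall b2, L b1 < b2 < U b1 -> all_local_max_global b1 b2 -> b2 = r b1)) /\
       (forall x y, x < y < b1c -> r y < r x)).
Proof.
  cbv zeta.
  split; [exact bounds_continuous|]. split; [intros x y [Hxy Hy]; apply bounds_decreasing; auto|].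
  split; [exact Lbd_lt_Ubd|]. split; [exact bounds_at_corner|].
  split; [exact bounds_at_minus_infinity|]. split; [exact outside_V|]. split.
  - intros b1 b2 Hb1 Hb2. destruct (inside_V b1 b2 Hb1 Hb2) as [u1 [m [u2 [_ HB]]]].
    pose proof HB as [H1 [H2 _]]. destruct (two_humps_max _ _ _ _ HB) as [L1 [L2 [Only _]]].
    exists u1, u2. split; [lra | split; [lra | auto]].
  - exists coexistence_line. split.
    + intros b1 Hb. destruct (coexistence_line_spec b1 Hb) as [HV HG].
      split; [exact HV | split; [exact HG |]].
      intros b2 Hb2 HG2. apply (coexistence_unique b1); auto.
    + intros x y [Hxy Hy]. apply coexistence_decreasing; auto.
Qed.

Lemma beta2c_is_corner : beta2c (S (S a)) (S (S (S (c + a)))) u0 = beta u0.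
Proof.
  unfold beta2c. replace (S (S a) - 1)%nat with (S a) by lia.
  rewrite INR_p, INR_q. unfold beta. rewrite <- Hk. unfold kappa, kappa_den.
  simpl_INR. field. nonzero.
Qed.

Lemma beta1c_is_corner : beta1c (S (S a)) (S (S (S (c + a)))) u0 = B1 u0.
Proof.
  rewrite B1_formula by exact Hu0. unfold beta1c. rewrite INR_p, INR_q, <- Hk.
  unfold Rdiv at 1. rewrite ln_mult, ln_Rinv by (try apply Rinv_0_lt_compat; lra).
  unfold kappa, kappa_den. simpl_INR. field. nonzero.
Qed.

End Corner.

End Model.

Theorem proposition3 (p q : nat) (b3 : R) :
  (2 <= p)%nat -> (p < q)%nat -> (q <= 5 * p - 1)%nat ->
  exists u0, 0 < u0 < 1 /\ u0_eq p q b3 u0 /\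
  (forall u, 0 < u < 1 -> u0_eq p q b3 u -> u = u0) /\
  let b1c := beta1c p q u0 in
  let b2c := beta2c p q u0 in
  exists L U : R -> R,
    (forall x, x < b1c -> continuity_pt L x /\ continuity_pt U x) /\
    (forall x y, x < y < b1c -> L y < L x /\ U y < U x) /\
    (forall x, x < b1c -> L x < U x) /\
    (forall eps, 0 < eps -> exists d, 0 < d /\ forall x, b1c - d < x < b1c ->
        Rabs (L x - b2c) < eps /\ Rabs (U x - b2c) < eps) /\
    (forall M, exists N, forall x, x < N -> x < b1c -> M < L x /\ M < U x) /\
    (forall b1 b2, ~ (b1 < b1c /\ L b1 < b2 < U b1) ->
       exists u, is_local_max01 (lfun p q b3 b1 b2) u /\
                 is_global_max01 (lfun p q b3 b1 b2) u /\
                 forall v, is_local_max01 (lfun p q b3 b1 b2) v -> v = u) /\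
    (forall b1 b2, b1 < b1c -> L b1 < b2 < U b1 ->
       exists u1 u2, 0 < u1 < u2 /\ u2 < 1 /\
         is_local_max01 (lfun p q b3 b1 b2) u1 /\
         is_local_max01 (lfun p q b3 b1 b2) u2 /\
         forall v, is_local_max01 (lfun p q b3 b1 b2) v -> v = u1 \/ v = u2) /\
    (exists r : R -> R,
       (forall b1, b1 < b1c ->
          L b1 < r b1 < U b1 /\
          (forall u, is_local_max01 (lfun p q b3 b1 (r b1)) u ->
                     is_global_max01 (lfun p q b3 b1 (r b1)) u) /\
          (forall b2, L b1 < b2 < U b1 ->
             (forall u, is_local_max01 (lfun p q b3 b1 b2) u ->
                        is_global_max01 (lfun p q b3 b1 b2) u) ->
             b2 = r b1)) /\
       (forall x y, x < y < b1c -> r y < r x)).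
Proof.
  intros Hp Hpq Hq.
  (* write p = a + 2 and q = c + a + 3; then q <= 5p - 1 reads c <= 4a + 6 *)
  destruct (ltac:(exists (p - 2)%nat, (q - p - 1)%nat; lia) :
    exists a c, p = S (S a) /\ q = S (S (S (c + a))) /\ (c <= 4 * a + 6)%nat)
    as [a [c [-> [-> Hca]]]].
  assert (Hc : INR c <= 4 * INR a + 6).
  { apply le_INR in Hca. rewrite plus_INR, mult_INR in Hca. simpl in Hca. lra. }
  destruct (kappa_root a c b3 Hc) as [u0 [Hu0 Hk]].
  exists u0. split; [exact Hu0 | split; [| split]].
  - apply u0_eq_kappa. auto.
  - intros u Hu Hequ. apply u0_eq_kappa in Hequ.
    apply (incr_on_inj _ (kappa a c) _ _ (kappa_incr a c Hc)); lra.
  - cbv zeta. rewrite (beta1c_is_corner a c b3 u0 Hu0 Hk), (beta2c_is_corner a c b3 u0 Hu0 Hk).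
    exists (Lbd a c b3 u0), (Ubd a c b3 u0).
    exact (phase_diagram a c b3 Hc u0 Hu0 Hk).
Qed.
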